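(* Let $L$ be a split regular Hom-Lie color algebra with symmetric root system $\Lambda$. If $\mathrm{Z}(L)=0$ and $[L,L]=L$, then $$L=\bigoplus_{[\alpha]\in\Lambda/\sim}I_{[\alpha]},$$ where $I_{[\alpha]}:=L_{\Lambda_\alpha}$ are ideals of $L$ with $[I_{[\alpha]},I_{[\beta]}]=0$ for $[\alpha]\neq[\beta]$.
   Context: Let $\mathbb{K}$ be a field and $\Gamma$ an abelian group. A bi-character is $\varepsilon:\Gamma\times\Gamma\to\mathbb{K}\setminus\{0\}$ with $\varepsilon(a,b)\varepsilon(b,a)=1$, $\varepsilon(a,b+c)=\varepsilon(a,b)\varepsilon(a,c)$, $\varepsilon(a+b,c)=\varepsilon(a,c)\varepsilon(b,c)$. A Hom-Lie color algebra $(L,[\cdot,\cdot],\phi,\varepsilon)$ is a $\Gamma$-graded space $L=\bigoplus_gL_g$ with bilinear $[\cdot,\cdot]$, $[L_g,L_h]\subset L_{g+h}$, linear $\phi$ with $\phi(L_g)\subset L_g$, $\phi([x,y])=[\phi x,\phi y]$, such that for homogeneous $x,y,z$ of degrees $\bar x,\bar y,\bar z$: $[x,y]=-\varepsilon(\bar x,\bar y)[y,x]$ and $\varepsilon(\bar z,\bar x)[\phi(x),[y,z]]+\varepsilon(\bar x,\bar y)[\phi(y),[z,x]]+\varepsilon(\bar y,\bar z)[\phi(z),[x,y]]=0$; regular means $\phi$ bijective. A subalgebra is a graded subspace $A$ with $[A,A]\subset A$, $\phi(A)=A$; abelian if $[A,A]=0$. An ideal is a graded subspace $I$ with $[I,L]\subset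 I$ and $\phi(I)=I$. The annihilator is $\mathrm{Z}(L)=\{x\in L:[x,L]=0\}$. $H=\bigoplus_gH_g$ is a maximal abelian graded subalgebra (so $\phi(H_0)=H_0$). For linear $\alpha:H_0\to\mathbb{K}$, $L_\alpha=\{v:[h,v]=\alpha(h)\phi(v)\ \forall h\in H_0\}$; $\Lambda=\{\alpha\in H_0^*\setminus\{0\}:L_\alpha\neq0\}$; $L$ is split if $L=H\oplus(\bigoplus_{\alpha\in\Lambda}L_\alpha)$. $\Lambda$ is symmetric if $\alpha\in\Lambda\Rightarrow-\alpha\in\Lambda$. For $z\in\mathbb{Z}$, $\alpha\phi^{z}:=\alpha\circ(\phi|_{H_0})^{z}$; $\mathbb{N}=\{0,1,2,\dots\}$. Connection: for $\alpha,\beta\in\Lambda$, $\alpha$ is connected to $\beta$ if there exist $k\ge1$ and $\alpha_1,\dots,\alpha_k\in\Lambda$ such that: if $k=1$, $\alpha_1\in\{\alpha\phi^{-n}:n\in\mathbb{N}\}\cap\{\pm\beta\phi^{-m}:m\in\mathbb{N}\}$; if $k\ge2$, then $\alpha_1\in\{\alpha\phi^{-n}:n\in\mathbb{N}\}$, for each $i=1,\dots,k-2$ one has $\alpha_1\phi^{-i}+\alpha_2\phi^{-i}+\alpha_3\phi^{-i+1}+\cdots+\alpha_{i+1}\phi^{-1}\in\Lambda$, and $\alpha_1\phi^{-k+1}+\alpha_2\phi^{-k+1}+\alpha_3\phi^{-k+2}+\cdots+\alpha_k\phi^{-1}\in\{\pm\beta\phi^{-m}:m\in\mathbb{N}\}$.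 Connectedness $\sim$ is an equivalence relation on $\Lambda$; $\Lambda_\alpha:=\{\beta\in\Lambda:\beta\sim\alpha\}$. Define $H_{\Lambda_\alpha}:=\mathrm{span}_{\mathbb{K}}\{[L_\beta,L_{-\beta}]:\beta\in\Lambda_\alpha\}\subset H$, $V_{\Lambda_\alpha}:=\bigoplus_{\beta\in\Lambda_\alpha}L_\beta$, and $L_{\Lambda_\alpha}:=H_{\Lambda_\alpha}\oplus V_{\Lambda_\alpha}$. *)

From HB Require Import structures.
From mathcomp Require Import all_boot all_order all_algebra.
Import GRing.Theory.
Local Open Scope ring_scope.

Section HomLieColor.

Context {K : fieldType} {G : zmodType} {L : lmodType K}.

Definition subspace (A : L -> Prop) : Prop :=
  A 0 /\ forall (a : K) (x y : L), A x -> A y -> A (a *: x + y).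

Definition fam_sum {I : Type} (P : I -> Prop) (F : I -> L -> Prop) (x : L) : Prop :=
  exists (n : nat) (i : 'I_n -> I) (v : 'I_n -> L),
    (forall k, P (i k) /\ F (i k) (v k)) /\ x = \sum_(k < n) v k.

Definition fam_indep {I : Type} (P : I -> Prop) (F : I -> L -> Prop)
    (E : I -> I -> Prop) : Prop :=
  forall (n : nat) (i : 'I_n -> I) (v : 'I_n -> L),
    (forall k, P (i k) /\ F (i k) (v k)) ->
    (forall k l, k != l -> ~ E (i k) (i l)) ->
    \sum_(k < n) v k = 0 -> forall k, v k = 0.

Definition graded_space (Lg : G -> L -> Prop) : Prop :=
  (forall g, subspace (Lg g)) /\
  (forall x, fam_sum (fun _ => True) Lg x) /\
  fam_indep (fun _ => True) Lg (fun g h => g = h).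

Definition graded_subspace (Lg : G -> L -> Prop) (A : L -> Prop) : Prop :=
  subspace A /\
  forall x, A x -> fam_sum (fun _ => True) (fun g y => Lg g y /\ A y) x.

Definition bicharacter (eps : G -> G -> K) : Prop :=
  (forall a b, eps a b != 0) /\
  (forall a b, eps a b * eps b a = 1) /\
  (forall a b c, eps a (b + c) = eps a b * eps a c) /\
  (forall a b c, eps (a + b) c = eps a c * eps b c).

Definition bilinear_map (br : L -> L -> L) : Prop :=
  (forall (a : K) x y z, br (a *: x + y) z = a *: br x z + br y z) /\
  (forall (a : K) x y z, br z (a *: x + y) = a *: br z x + br z y).

Definition linear_map (phi : L -> L) : Prop :=
  forall (a : K) x y, phi (a *: x + y) = a *: phi x + phi y.

Definition HomLieColor (Lg : G -> L -> Prop) (br : L -> L -> L) (phi : L -> L)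
    (eps : G -> G -> K) : Prop :=
  graded_space Lg /\ bicharacter eps /\ bilinear_map br /\ linear_map phi /\
  (forall g h x y, Lg g x -> Lg h y -> Lg (g + h) (br x y)) /\
  (forall g x, Lg g x -> Lg g (phi x)) /\
  (forall x y, phi (br x y) = br (phi x) (phi y)) /\
  (forall a b x y, Lg a x -> Lg b y -> br x y = - (eps a b *: br y x)) /\
  (forall a b c x y z, Lg a x -> Lg b y -> Lg c z ->
     eps c a *: br (phi x) (br y z) + eps a b *: br (phi y) (br z x)
       + eps b c *: br (phi z) (br x y) = 0).

Definition phi_stable (phi : L -> L) (A : L -> Prop) : Prop :=
  (forall x, A x -> A (phi x)) /\ (forall x, A x -> exists y, A y /\ phi y = x).

Definition subalgebra (Lg : G -> L -> Prop) (br : L -> L -> L) (phi : L -> L)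
    (A : L -> Prop) : Prop :=
  graded_subspace Lg A /\ (forall x y, A x -> A y -> A (br x y)) /\ phi_stable phi A.

Definition abelian (br : L -> L -> L) (A : L -> Prop) : Prop :=
  forall x y, A x -> A y -> br x y = 0.

Definition ideal (Lg : G -> L -> Prop) (br : L -> L -> L) (phi : L -> L)
    (I : L -> Prop) : Prop :=
  graded_subspace Lg I /\
  (forall x y, I x -> I (br x y)) /\ phi_stable phi I.

Definition max_abelian_subalgebra (Lg : G -> L -> Prop) (br : L -> L -> L)
    (phi : L -> L) (H : L -> Prop) : Prop :=
  subalgebra Lg br phi H /\ abelian br H /\
  forall A, subalgebra Lg br phi A -> abelian br A ->
    (forall x, H x -> A x) -> forall x, A x -> H x.

Definition zero_annihilator (br : L -> L -> L) : Prop :=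
  forall x, (forall y, br x y = 0) -> x = 0.

Definition span_brackets (br : L -> L -> L) (P : L -> L -> Prop) (x : L) : Prop :=
  exists (n : nat) (c : 'I_n -> K) (u w : 'I_n -> L),
    (forall k, P (u k) (w k)) /\ x = \sum_(k < n) c k *: br (u k) (w k).

(* Elements of H_0^* are represented by functions L -> K, considered only
   through their values on H_0 = H cap L_0. *)
Section Roots.
Variables (Lg : G -> L -> Prop) (H : L -> Prop) (br : L -> L -> L)
  (phi psi : L -> L).
(* psi is the inverse of the (bijective) phi *)

Definition H0 (h : L) : Prop := H h /\ Lg 0 h.

Definition eqH0 (a b : L -> K) : Prop := forall h, H0 h -> a h = b h.

Definition linear_on_H0 (a : L -> K) : Prop :=
  forall (c : K) h h', H0 h -> H0 h' -> a (c *: h + h') = c * a h + a h'.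

Definition Lroot (a : L -> K) (v : L) : Prop :=
  forall h, H0 h -> br h v = a h *: phi v.

Definition isRoot (a : L -> K) : Prop :=
  linear_on_H0 a /\ (exists h, H0 h /\ a h != 0) /\ (exists v, v != 0 /\ Lroot a v).

Definition phin (a : L -> K) (n : nat) : L -> K := fun h => a (iter n psi h).

Definition oppf (a : L -> K) : L -> K := fun h => - a h.

(* For alpha_1, ..., alpha_k given as (a 1), ..., (a k):
   S a i = alpha_1 phi^{-i} + alpha_2 phi^{-i} + alpha_3 phi^{-i+1} + ... + alpha_{i+1} phi^{-1}
   (and S a 0 = alpha_1). *)
Definition Ssum (a : nat -> L -> K) (i : nat) : L -> K :=
  fun h => phin (a 1%N) i h + \sum_(2 <= j < i.+2) phin (a j) (i.+2 - j) h.

Definition connected (alpha beta : L -> K) : Prop :=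
  exists (k : nat) (a : nat -> L -> K),
    (1 <= k)%N /\
    (forall j, (1 <= j <= k)%N -> isRoot (a j)) /\
    (exists n, eqH0 (a 1%N) (phin alpha n)) /\
    (forall i, (1 <= i <= k - 2)%N -> isRoot (Ssum a i)) /\
    (exists m, eqH0 (Ssum a (k - 1)) (phin beta m) \/
               eqH0 (Ssum a (k - 1)) (phin (oppf beta) m)).

Definition LambdaClass (alpha beta : L -> K) : Prop :=
  isRoot beta /\ connected beta alpha.

Definition HLambda (alpha : L -> K) (x : L) : Prop :=
  span_brackets br (fun u w => exists beta, LambdaClass alpha beta /\
                         Lroot beta u /\ Lroot (oppf beta) w) x.

Definition VLambda (alpha : L -> K) (x : L) : Prop :=
  fam_sum (LambdaClass alpha) Lroot x.

(* I_[alpha] = L_{Lambda_alpha} = H_{Lambda_alpha} + V_{Lambda_alpha} *)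
Definition Iclass (alpha : L -> K) (x : L) : Prop :=
  exists h v, HLambda alpha h /\ VLambda alpha v /\ x = h + v.

Definition split_alg : Prop :=
  (forall x, exists h v, H h /\ fam_sum isRoot Lroot v /\ x = h + v) /\
  (forall (n : nat) (h : L) (b : 'I_n -> L -> K) (v : 'I_n -> L),
     H h -> (forall k, isRoot (b k) /\ Lroot (b k) (v k)) ->
     (forall k l, k != l -> ~ eqH0 (b k) (b l)) ->
     h + \sum_(k < n) v k = 0 -> h = 0 /\ forall k, v k = 0).

Definition symmetric_roots : Prop := forall a, isRoot a -> isRoot (oppf a).

End Roots.

End HomLieColor.

(** The Jacobi identity applied to an element of H_0 shows that
    [L_a, L_b] lies in the root space of the root (a + b)phi^{-1}, and the
    splitting forces the root space of 0 to lie inside H.  Hence a bracket of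
    root vectors either vanishes, lies in H (when b = -a), or is a root vector
    of a root connected to a and b; connectedness is recast as reachability
    along such steps, which makes it an equivalence relation compatible with
    phi, -1 and sums.  Consequently each I_[a] is an ideal, and ideals of
    distinct classes annihilate each other (the H-part is handled by Jacobi
    once more).  [L, L] = L shows that the I_[a] span L.  In a vanishing sum of
    elements of distinct I_[a], the root vectors vanish class by class by the
    directness of the splitting, and the remaining H-parts commute with every
    ideal, hence with L, so they lie in Z(L) = 0. *)

From HB Require Import structures.
From mathcomp Require Import all_boot all_order all_algebra zify.
From Stdlib Require Import Classical ClassicalEpsilon.
From Stdlib Require List.
Import GRing.Theory.
Local Open Scope ring_scope.

Set Implicit Arguments.
Unset Strict Implicit.

Definition classicb (P : Prop) : bool :=
  if excluded_middle_informative P then true else false.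

Lemma classicbP (P : Prop) : reflect P (classicb P).
Proof. by rewrite /classicb; case: excluded_middle_informative => h; constructor. Qed.

Lemma classicbT (P : Prop) : P -> classicb P = true.
Proof. by move=> h; apply/classicbP. Qed.

Lemma classicbF (P : Prop) : ~ P -> classicb P = false.
Proof. by move=> h; apply/classicbP. Qed.

Lemma In_filter {T : Type} (a : pred T) s x :
  List.In x (filter a s) <-> List.In x s /\ a x.
Proof.
elim: s => [|y s IH] /=; first by split => [|[]].
case ha: (a y) => /=.
  split; first by case=> [<-|/IH [h1 h2]]; [split; [left|] | split; [right|]].
  by case=> [[<-|h1] h2]; [left | right; apply/IH].
split; first by case/IH => h1 h2; split; [right|].
case=> [[<-|h1] h2]; first by rewrite ha in h2.
by apply/IH.
Qed.

Lemma In_nth {T : Type} (d : T) s k : (k < size s)%N -> List.In (nth d s k) s.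
Proof. by elim: s k => [|x s IH] [|k] //= hk; [left | right; apply: IH]. Qed.

Lemma nth_of_In {T : Type} (d : T) s p : List.In p s ->
  exists2 k, (k < size s)%N & p = nth d s k.
Proof.
elim: s => [|q r IH] //= [->|/IH [k hk ->]]; first by exists 0%N.
by exists k.+1.
Qed.

Section Subspaces.
Context {K : fieldType} {L : lmodType K}.
Implicit Types (A B S : L -> Prop) (f : L -> L).

Lemma subspace0 A : subspace A -> A 0.
Proof. by case. Qed.

Lemma subspaceD A x y : subspace A -> A x -> A y -> A (x + y).
Proof. by case=> _ h ax ay; have := h 1 x y ax ay; rewrite scale1r. Qed.

Lemma subspaceZ A [c] x : subspace A -> A x -> A (c *: x).
Proof. by case=> h0 h ax; have := h c x 0 ax h0; rewrite addr0. Qed.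

Lemma subspaceN A x : subspace A -> A x -> A (- x).
Proof. by move=> sA ax; rewrite -scaleN1r; apply: subspaceZ. Qed.

Lemma subspaceB A x y : subspace A -> A x -> A y -> A (x - y).
Proof. by move=> sA ax ay; apply: subspaceD => //; apply: subspaceN. Qed.

Lemma subspace_sum A n (F : 'I_n -> L) :
  subspace A -> (forall k, A (F k)) -> A (\sum_(k < n) F k).
Proof.
move=> sA h; apply: (big_ind A) => //; first exact: subspace0.
by move=> x y; apply: subspaceD.
Qed.

Lemma subspace_eq0 : subspace (fun v : L => v = 0).
Proof. by split => // c x y -> ->; rewrite scaler0 addr0. Qed.

Lemma subspaceI A B : subspace A -> subspace B -> subspace (fun x => A x /\ B x).
Proof.
move=> [a0 ha] [b0 hb]; split => // c x y [h1 h2] [h3 h4].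
by split; [exact: ha | exact: hb].
Qed.

Lemma linear_mapD f : linear_map f -> {morph f : x y / x + y}.
Proof. by move=> hf x y; have := hf 1 x y; rewrite !scale1r. Qed.

Lemma linear_map0 f : linear_map f -> f 0 = 0.
Proof.
move=> hf; have e := linear_mapD hf 0 0; rewrite addr0 in e.
by apply: (addrI (f 0)); rewrite addr0 -e.
Qed.

Lemma linear_mapZ f c x : linear_map f -> f (c *: x) = c *: f x.
Proof. by move=> hf; have := hf c x 0; rewrite addr0 linear_map0 // addr0. Qed.

Lemma linear_mapN f x : linear_map f -> f (- x) = - f x.
Proof. by move=> hf; rewrite -scaleN1r linear_mapZ // scaleN1r. Qed.

Lemma subspace_preim S f : subspace S -> linear_map f -> subspace (fun x => S (f x)).
Proof.
move=> sS hf; split; first by rewrite linear_map0 //; apply: subspace0.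
by move=> c x y h1 h2 /=; rewrite hf; apply: subspaceD sS (subspaceZ sS h1) h2.
Qed.

End Subspaces.

Section Families.
Context {K : fieldType} {L : lmodType K}.

Definition vsum {I : Type} (s : seq (I * L)) : L := foldr (fun p acc => p.2 + acc) 0 s.

Definition fam_of {I : Type} (R : I -> L -> Prop) (s : seq (I * L)) : Prop :=
  List.Forall (fun p => R p.1 p.2) s.

Lemma fam_of_nil {I : Type} (R : I -> L -> Prop) : fam_of R [::].
Proof. by constructor. Qed.
#[local] Hint Resolve fam_of_nil : core.

Lemma fam_of_cons {I : Type} (R : I -> L -> Prop) p s :
  fam_of R (p :: s) <-> R p.1 p.2 /\ fam_of R s.
Proof. by split => [h|[h1 h2]]; [inversion h | constructor]. Qed.

Lemma fam_of_In {I : Type} (R : I -> L -> Prop) s :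
  fam_of R s <-> forall p, List.In p s -> R p.1 p.2.
Proof. exact: List.Forall_forall. Qed.

Lemma fam_of_impl {I : Type} (R R' : I -> L -> Prop) s :
  (forall i x, R i x -> R' i x) -> fam_of R s -> fam_of R' s.
Proof. by move=> h; apply: List.Forall_impl => p; apply: h. Qed.

Lemma fam_of_filter {I : Type} (R : I -> L -> Prop) a s :
  fam_of R s -> fam_of R (filter a s).
Proof. by move=> /fam_of_In h; apply/fam_of_In => p /In_filter [/h]. Qed.

Lemma fam_of_cat {I : Type} (R : I -> L -> Prop) s1 s2 :
  fam_of R s1 -> fam_of R s2 -> fam_of R (s1 ++ s2).
Proof. by move=> h1 h2; apply/List.Forall_app. Qed.

Lemma fam_of_map {I J : Type} (R : I -> L -> Prop) (R' : J -> L -> Prop)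
    (f : I * L -> J * L) s :
  (forall p, R p.1 p.2 -> R' (f p).1 (f p).2) -> fam_of R s -> fam_of R' (map f s).
Proof.
move=> h; elim: s => [|p s IH] //= /fam_of_cons [h1 h2].
by constructor; [apply: h | apply: IH].
Qed.

Lemma fam_of_nth {I : Type} (R : I -> L -> Prop) d s k :
  fam_of R s -> (k < size s)%N -> R (nth d s k).1 (nth d s k).2.
Proof. by move=> /fam_of_In h hk; apply/h/In_nth. Qed.

Lemma vsum_cat {I : Type} (s1 s2 : seq (I * L)) : vsum (s1 ++ s2) = vsum s1 + vsum s2.
Proof. by elim: s1 => [|p s IH] /=; rewrite ?add0r // IH addrA. Qed.

Lemma vsum_flatten {I : Type} (ls : seq (seq (I * L))) :
  vsum (flatten ls) = \sum_(l <- ls) vsum l.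
Proof. by elim: ls => [|l ls IH]; rewrite ?big_nil ?big_cons //= vsum_cat IH. Qed.

Lemma vsum_filter {I : Type} (a : pred (I * L)) (s : seq (I * L)) :
  vsum s = vsum (filter a s) + vsum (filter (predC a) s).
Proof.
elim: s => [|p s IH] /=; first by rewrite addr0.
by case: (a p) => /=; rewrite IH; [rewrite addrA | rewrite addrCA].
Qed.

Lemma vsumE {I : Type} (s : seq (I * L)) : vsum s = \sum_(p <- s) p.2.
Proof. by elim: s => [|p s IH]; rewrite ?big_nil ?big_cons //= IH. Qed.

Lemma vsum_nth {I : Type} (d : I * L) s : vsum s = \sum_(k < size s) (nth d s k).2.
Proof. by rewrite vsumE (big_nth d) big_mkord. Qed.

Lemma vsum_eq_in {I J : Type} (f g : I * L -> J * L) (s : seq (I * L)) :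
  (forall p, List.In p s -> (f p).2 = (g p).2) -> vsum (map f s) = vsum (map g s).
Proof.
elim: s => [|p s IH] //= h; rewrite h; last by left.
by rewrite IH // => q hq; apply: h; right.
Qed.

Lemma linear_vsum {I : Type} (f : L -> L) (s : seq (I * L)) :
  linear_map f -> f (vsum s) = vsum [seq (p.1, f p.2) | p <- s].
Proof.
move=> hf; elim: s => [|p s IH] /=; first exact: linear_map0.
by rewrite linear_mapD // IH.
Qed.

Lemma vsum_eq0 {I : Type} (s : seq (I * L)) : fam_of (fun _ v => v = 0) s -> vsum s = 0.
Proof. by elim: s => [|p s IH] //= /fam_of_cons [-> /IH ->]; rewrite addr0. Qed.

Lemma subspace_vsum (A : L -> Prop) {I : Type} (R : I -> L -> Prop) s :
  subspace A -> (forall i x, R i x -> A x) -> fam_of R s -> A (vsum s).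
Proof.
move=> sA h; elim: s => [|p s IH] /=; first by move=> _; apply: subspace0.
by case/fam_of_cons => h1 h2; apply: subspaceD => //; [apply: (h p.1) | apply: IH].
Qed.

Lemma fam_sum_seq {I : Type} (P : I -> Prop) (F : I -> L -> Prop) x :
  fam_sum P F x <-> exists s, fam_of (fun i v => P i /\ F i v) s /\ x = vsum s.
Proof.
split.
  case=> n [i [v [h ->]]]; exists [seq (i k, v k) | k <- enum 'I_n]; split.
    by apply/fam_of_In => p /List.in_map_iff [k [<- _]]; apply: h.
  by rewrite vsumE big_map big_enum.
case=> s [hF ->]; case: s hF => [|p0 s] hF.
  have f0 : 'I_0 -> I by case=> m; rewrite ltn0.
  by exists 0%N, f0, (fun _ => 0); split => //=; [case | rewrite big_ord0].
exists (size (p0 :: s)), (fun k => (nth p0 (p0 :: s) k).1),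
  (fun k => (nth p0 (p0 :: s) k).2); split; last exact: vsum_nth.
by move=> k; apply: (fam_of_nth (R := fun i v => P i /\ F i v)).
Qed.

Lemma fam_sum_subspace {I : Type} (P : I -> Prop) (F : I -> L -> Prop) :
  (forall i c v, P i -> F i v -> F i (c *: v)) -> subspace (fam_sum P F).
Proof.
move=> hZ; split; first by apply/fam_sum_seq; exists [::].
move=> a x y /fam_sum_seq [s1 [h1 ->]] /fam_sum_seq [s2 [h2 ->]].
apply/fam_sum_seq; exists ([seq (p.1, a *: p.2) | p <- s1] ++ s2); split.
  apply: fam_of_cat h2; apply: fam_of_map h1 => p [hp hf]; split => //; exact: hZ.
by rewrite vsum_cat -linear_vsum // => c u v; rewrite scalerDr !scalerA mulrC.
Qed.

Lemma fam_sum_ind {I : Type} (P : I -> Prop) (F : I -> L -> Prop) (S : L -> Prop) x :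
  subspace S -> (forall i v, P i -> F i v -> S v) -> fam_sum P F x -> S x.
Proof.
move=> sS h /fam_sum_seq [s [hs ->]].
by apply: (subspace_vsum sS (R := fun i v => P i /\ F i v)) hs => i v [hp]; apply: h.
Qed.

Lemma fam_sum1 {I : Type} (P : I -> Prop) (F : I -> L -> Prop) i v :
  P i -> F i v -> fam_sum P F v.
Proof. by move=> hp hf; apply/fam_sum_seq; exists [:: (i, v)]; split; [constructor | rewrite /= addr0]. Qed.

End Families.
#[local] Hint Resolve fam_of_nil : core.

Section ClassSums.
Context {K : fieldType} {L : lmodType K} {I : Type} (E : I -> I -> Prop).
Hypotheses (Erefl : forall i, E i i) (Esym : forall i j, E i j -> E j i)
  (Etrans : forall i j k, E i j -> E j k -> E i k).

Definition class_vsum (s : seq (I * L)) (j : I) : L :=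
  vsum (filter (fun p => classicb (E p.1 j)) s).

Fixpoint distinct_classes (s : seq (I * L)) : Prop :=
  if s is p :: s' then List.Forall (fun q => ~ E p.1 q.1) s' /\ distinct_classes s'
  else True.

Lemma class_vsum_cons p s j :
  class_vsum (p :: s) j = (if classicb (E p.1 j) then p.2 else 0) + class_vsum s j.
Proof. by rewrite /class_vsum /=; case: classicb => //=; rewrite add0r. Qed.

Lemma class_vsum_cat s1 s2 j : class_vsum (s1 ++ s2) j = class_vsum s1 j + class_vsum s2 j.
Proof. by rewrite /class_vsum filter_cat vsum_cat. Qed.

Lemma class_vsum_flatten (ls : seq (seq (I * L))) j :
  class_vsum (flatten ls) j = \sum_(l <- ls) class_vsum l j.
Proof. by elim: ls => [|l ls IH]; rewrite ?big_nil ?big_cons //= class_vsum_cat IH. Qed.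

Lemma class_vsum_map (f : L -> L) s j : linear_map f ->
  class_vsum [seq (p.1, f p.2) | p <- s] j = f (class_vsum s j).
Proof. by move=> hf; rewrite /class_vsum filter_map linear_vsum // -map_comp. Qed.

Lemma class_vsum_out s j : List.Forall (fun q => ~ E q.1 j) s -> class_vsum s j = 0.
Proof.
elim: s => [|p s IH] // h; inversion h; subst.
by rewrite class_vsum_cons IH // classicbF // add0r.
Qed.

Lemma class_vsum_in s i j : List.Forall (fun q => E q.1 i) s ->
  class_vsum s j = if classicb (E i j) then vsum s else 0.
Proof.
elim: s => [|q s IH] h; first by case: classicb.
inversion h; subst; rewrite class_vsum_cons IH //=.
case: (classicbP (E i j)) => hj; first by rewrite classicbT //; apply: Etrans hj.
by rewrite classicbF ?add0r // => hqj; apply: hj; apply: Etrans hqj; exact: Esym.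
Qed.

Lemma class_vsum_eq0 s j : fam_of (fun _ v => v = 0) s -> class_vsum s j = 0.
Proof. by move=> h; apply: vsum_eq0; apply: fam_of_filter. Qed.

Lemma class_vsum_distinct s q :
  distinct_classes s -> List.In q s -> class_vsum s q.1 = q.2.
Proof.
elim: s => [|r s IH] //= [hr hd] [<-|hq].
  rewrite class_vsum_cons classicbT // class_vsum_out ?addr0 //.
  by apply: List.Forall_impl hr => p h1 h2; apply: h1; apply: Esym.
rewrite class_vsum_cons classicbF ?add0r; first exact: IH.
by move=> he; move: hr => /List.Forall_forall /(_ q hq); apply.
Qed.

Lemma distinct_classes_nth d s k l : distinct_classes s ->
  (k < size s)%N -> (l < size s)%N -> k != l -> ~ E (nth d s k).1 (nth d s l).1.
Proof.
elim: s k l => [|q s IH] [|k] [|l] //= [hq hd] hk hl hkl.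
- by move: hq => /List.Forall_forall h; apply: h; exact: In_nth.
- move: hq => /List.Forall_forall h he; apply: (h (nth d s k)); first exact: In_nth.
  exact: Esym.
- exact: IH.
Qed.

Lemma vsum_distinct_classes_eq0 t :
  distinct_classes t -> (forall j, class_vsum t j = 0) -> vsum t = 0.
Proof.
elim: t => [|q t IH] //= [hq hd] hg.
have e0 : class_vsum t q.1 = 0.
  apply: class_vsum_out; apply: List.Forall_impl hq => r h1 h2; apply: h1; exact: Esym.
have q0 : q.2 = 0 by have := hg q.1; rewrite class_vsum_cons classicbT // e0 addr0.
rewrite q0 add0r IH // => j; have := hg j.
by rewrite class_vsum_cons q0; case: classicb; rewrite add0r.
Qed.

Variable F : I -> L -> Prop.
Hypotheses (Fcompat : forall i j x, E i j -> F i x -> F j x)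
  (FD : forall i x y, F i x -> F i y -> F i (x + y)).

Lemma F_addr_vsum s i : fam_of F s -> List.Forall (fun q => E q.1 i) s ->
  forall x, F i x -> F i (x + vsum s).
Proof.
elim: s => [|q s IH] /=; first by move=> _ _ x; rewrite addr0.
move=> /fam_of_cons [Fq Fs] hE x Fx; inversion hE as [|? ? Eq Es]; subst.
by rewrite addrA; apply: IH => //; apply: FD Fx (Fcompat Eq Fq).
Qed.

(** The last component is the invariant that makes the induction go through. *)
Lemma regroup_classes s : fam_of F s -> exists t,
  [/\ distinct_classes t, fam_of F t, vsum t = vsum s,
      forall j, class_vsum t j = class_vsum s j &
      List.Forall (fun q => exists r, List.In r s /\ E q.1 r.1) t].
Proof.
have [n] := ubnP (size s); elim: n s => // n IH [|p s] /= Hsz.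
  by exists [::].
case/fam_of_cons => Fp Fs.
set a := fun q : I * L => classicb (E q.1 p.1).
have szB : (size (filter (predC a) s) < n)%N.
  by rewrite size_filter; apply: leq_ltn_trans (count_size _ _) _; exact: Hsz.
have [tB [dB fB sB gB iB]] := IH _ szB (fam_of_filter _ Fs).
set As := filter a s.
have EAs : List.Forall (fun q => E q.1 p.1) As.
  by apply/List.Forall_forall => q /In_filter [_ /classicbP].
exists ((p.1, p.2 + vsum As) :: tB); split.
- split => //=; apply/List.Forall_forall => q hq.
  have [r [hr hqr]] := proj1 (List.Forall_forall _ _) iB q hq.
  move=> hpq; case/In_filter: hr => _ /=; rewrite /a classicbT //.
  by apply: Esym; apply: Etrans hpq hqr.
- by constructor => //; apply: (F_addr_vsum (fam_of_filter _ Fs)).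
- by rewrite /= sB (vsum_filter a s) addrA.
- move=> j; have hA := class_vsum_in j EAs.
  have hsplit : class_vsum s j = class_vsum As j + class_vsum (filter (predC a) s) j.
    rewrite /class_vsum /As (vsum_filter a) -!filter_predI.
    by congr (_ + _); congr vsum; apply: eq_filter => q; rewrite /= andbC.
  rewrite !class_vsum_cons gB hsplit hA.
  by case: (classicbP (E p.1 j)) => hj /=; rewrite ?addrA ?add0r.
- constructor; first by exists p; split; [left|].
  apply: List.Forall_impl iB => q [r [hr hqr]]; exists r; split => //; right.
  by case/In_filter: hr.
Qed.

Lemma class_vsums_eq0 :
  (forall t, distinct_classes t -> fam_of F t -> vsum t = 0 -> fam_of (fun _ v => v = 0) t) ->
  forall s, fam_of F s -> vsum s = 0 -> forall j, class_vsum s j = 0.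
Proof.
move=> hI s hF hs j; have [t [dt ft st gt _]] := regroup_classes hF.
by rewrite -gt; apply: class_vsum_eq0; apply: hI => //; rewrite st.
Qed.

Lemma vsum_eq0_of_classes s : fam_of F s -> (forall j, class_vsum s j = 0) -> vsum s = 0.
Proof.
move=> hF hg; have [t [dt ft st gt _]] := regroup_classes hF.
by rewrite -st; apply: vsum_distinct_classes_eq0 => // j; rewrite gt.
Qed.

End ClassSums.

Section HomLieColorAlgebra.
Context (K : fieldType) (G : zmodType) (L : lmodType K)
  (Lg : G -> L -> Prop) (br : L -> L -> L) (phi psi : L -> L)
  (eps : G -> G -> K) (H : L -> Prop).
Hypotheses (hHLC : HomLieColor Lg br phi eps) (phiK : cancel phi psi)
  (psiK : cancel psi phi) (hH : max_abelian_subalgebra Lg br phi H)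
  (hsplit : split_alg Lg H br phi) (hsym : symmetric_roots Lg H br phi)
  (hZ : zero_annihilator br)
  (hLL : forall x, span_brackets br (fun _ _ => True) x).

Local Notation H0 := (H0 Lg H).
Local Notation eqH0 := (eqH0 Lg H).
Local Notation Lroot := (Lroot Lg H br phi).
Local Notation isRoot := (isRoot Lg H br phi).
Local Notation phin := (phin psi).

Lemma Lg_subspace g : subspace (Lg g).
Proof. by case: hHLC => [[h _] _]. Qed.

Lemma Lg_decomp x : fam_sum (fun _ => True) Lg x.
Proof. by case: hHLC => [[_ [h _]] _]. Qed.

Lemma Lg_indep : fam_indep (fun _ => True) Lg (fun g h => g = h).
Proof. by case: hHLC => [[_ [_ h]] _]. Qed.

Lemma eps_neq0 a b : eps a b != 0.
Proof. by case: hHLC => _ [[h _] _]. Qed.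

Lemma eps_inv a b : eps a b * eps b a = 1.
Proof. by case: hHLC => _ [[_ [h _]] _]. Qed.

Lemma epsDl a b c : eps (a + b) c = eps a c * eps b c.
Proof. by case: hHLC => _ [[_ [_ [_ h]]] _]. Qed.

Lemma br_bilinear : bilinear_map br.
Proof. by case: hHLC => _ [_ [h _]]. Qed.

Lemma phi_linear : linear_map phi.
Proof. by case: hHLC => _ [_ [_ [h _]]]. Qed.

Lemma Lg_br g h x y : Lg g x -> Lg h y -> Lg (g + h) (br x y).
Proof. by case: hHLC => _ [_ [_ [_ [h' _]]]]; apply: h'. Qed.

Lemma Lg_phi g x : Lg g x -> Lg g (phi x).
Proof. by case: hHLC => _ [_ [_ [_ [_ [h' _]]]]]; apply: h'. Qed.

Lemma phi_br x y : phi (br x y) = br (phi x) (phi y).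
Proof. by case: hHLC => _ [_ [_ [_ [_ [_ [h' _]]]]]]. Qed.

Lemma br_skew a b x y : Lg a x -> Lg b y -> br x y = - (eps a b *: br y x).
Proof. by case: hHLC => _ [_ [_ [_ [_ [_ [_ [h' _]]]]]]]; apply: h'. Qed.

Lemma br_jacobi a b c x y z : Lg a x -> Lg b y -> Lg c z ->
  eps c a *: br (phi x) (br y z) + eps a b *: br (phi y) (br z x)
    + eps b c *: br (phi z) (br x y) = 0.
Proof. by case: hHLC => _ [_ [_ [_ [_ [_ [_ [_ h']]]]]]]; apply: h'. Qed.

Lemma H_graded : graded_subspace Lg H.
Proof. by case: hH => [[h _] _]. Qed.

Lemma H_subspace : subspace H.
Proof. by case: H_graded. Qed.

Lemma H_phi x : H x -> H (phi x).
Proof. by case: hH => [[_ [_ [h _]]] _]; exact: h. Qed.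

Lemma H_psi x : H x -> H (psi x).
Proof.
case: hH => [[_ [_ [_ h]]] _] hx; have [y [hy e]] := h x hx.
by rewrite -e phiK.
Qed.

Lemma H_abelian x y : H x -> H y -> br x y = 0.
Proof. by case: hH => _ [h _]; exact: h. Qed.

Lemma eps0l c : eps 0 c = 1.
Proof.
have e := epsDl 0 0 c; rewrite addr0 in e.
by apply: (mulfI (eps_neq0 0 c)); rewrite mulr1 -e.
Qed.

Lemma eps0r c : eps c 0 = 1.
Proof. by have := eps_inv c 0; rewrite eps0l mulr1. Qed.

Lemma linear_brl y : linear_map (br^~ y).
Proof. by case: br_bilinear => h _ a x x'; apply: h. Qed.

Lemma linear_brr x : linear_map (br x).
Proof. by case: br_bilinear => _ h a y y'; apply: h. Qed.

Lemma brZl c x y : br (c *: x) y = c *: br x y.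
Proof. exact: (linear_mapZ _ _ (linear_brl y)). Qed.

Lemma brZr c x y : br x (c *: y) = c *: br x y.
Proof. exact: (linear_mapZ _ _ (linear_brr x)). Qed.

Lemma brDl x x' y : br (x + x') y = br x y + br x' y.
Proof. exact: (linear_mapD (linear_brl y)). Qed.

Lemma brDr x y y' : br x (y + y') = br x y + br x y'.
Proof. exact: (linear_mapD (linear_brr x)). Qed.

Lemma br0l y : br 0 y = 0.
Proof. exact: (linear_map0 (linear_brl y)). Qed.

Lemma br0r x : br x 0 = 0.
Proof. exact: (linear_map0 (linear_brr x)). Qed.

Lemma brNl x y : br (- x) y = - br x y.
Proof. exact: (linear_mapN _ (linear_brl y)). Qed.

Lemma brNr x y : br x (- y) = - br x y.
Proof. exact: (linear_mapN _ (linear_brr x)). Qed.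

Lemma phi0 : phi 0 = 0.
Proof. exact: linear_map0 phi_linear. Qed.

Lemma phiZ c x : phi (c *: x) = c *: phi x.
Proof. exact: linear_mapZ phi_linear. Qed.

Lemma phi_inj : injective phi.
Proof. exact: can_inj phiK. Qed.

Lemma psi_linear : linear_map psi.
Proof. by move=> a x y; apply: phi_inj; rewrite phi_linear !psiK. Qed.

Lemma psi_br x y : psi (br x y) = br (psi x) (psi y).
Proof. by apply: phi_inj; rewrite phi_br !psiK. Qed.

(** ** Homogeneous decompositions *)

Lemma Lg_seq x : exists s, fam_of Lg s /\ x = vsum s.
Proof.
have [s [hs ->]] := (fam_sum_seq _ _ _).1 (Lg_decomp x).
by exists s; split => //; apply: fam_of_impl hs => i v [].
Qed.

Lemma Lg_seq_indep t : distinct_classes (fun g h => g = h) t -> fam_of Lg t ->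
  vsum t = 0 -> fam_of (fun _ v => v = 0) t.
Proof.
case: t => [|p0 t0] // hD hF hs; set t := p0 :: t0 in hD hF hs *.
apply/fam_of_In => p /(nth_of_In p0) [k hk ->].
apply: (Lg_indep (i := fun k : 'I_(size t) => (nth p0 t k).1)
          (v := fun k => (nth p0 t k).2) _ _ _ (Ordinal hk)).
- by move=> l; split => //; apply: fam_of_nth.
- by move=> k' l' hkl; apply: (distinct_classes_nth (E := fun g h => g = h)).
- by rewrite -(vsum_nth p0).
Qed.

Let eqG_refl (i : G) : i = i. Proof. by []. Qed.
Let eqG_sym (i j : G) : i = j -> j = i. Proof. by move=> ->. Qed.
Let eqG_trans (i j k : G) : i = j -> j = k -> i = k. Proof. by move=> -> ->. Qed.
Let Lg_eqG (i j : G) x : i = j -> Lg i x -> Lg j x. Proof. by move=> ->. Qed.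
Let Lg_add i x y : Lg i x -> Lg i y -> Lg i (x + y). Proof. exact: subspaceD (Lg_subspace i). Qed.

Lemma Lg_class_vsums_eq0 s : fam_of Lg s -> vsum s = 0 ->
  forall g, class_vsum (fun g h => g = h) s g = 0.
Proof. exact: (class_vsums_eq0 eqG_refl eqG_sym eqG_trans Lg_eqG Lg_add Lg_seq_indep). Qed.

Lemma Lg_regroup s : fam_of Lg s -> exists t,
  [/\ distinct_classes (fun g h => g = h) t, fam_of Lg t, vsum t = vsum s &
      forall j, class_vsum (fun g h => g = h) t j = class_vsum (fun g h => g = h) s j].
Proof.
by move=> hs; have [t [? ? ? ? _]] := regroup_classes eqG_refl eqG_sym eqG_trans Lg_eqG Lg_add hs; exists t.
Qed.

Lemma vsum_Lg_eq0_of_classes s : fam_of Lg s ->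
  (forall g, class_vsum (fun g h => g = h) s g = 0) -> vsum s = 0.
Proof. exact: (vsum_eq0_of_classes eqG_refl eqG_sym eqG_trans Lg_eqG Lg_add). Qed.

Lemma homogeneous_kernel_decomp (Idx : Type) (f : Idx -> L -> L) x :
  (forall i, linear_map (f i)) -> (forall i g v, Lg g v -> Lg g (f i v)) ->
  (forall i, f i x = 0) ->
  exists t, fam_of (fun g v => Lg g v /\ forall i, f i v = 0) t /\ x = vsum t.
Proof.
move=> hlin hgr hx; have [s [hs ex]] := Lg_seq x.
have [t [dt ft st gt]] := Lg_regroup hs.
exists t; split; last by rewrite st.
apply/fam_of_In => q hq; split; first exact: (proj1 (fam_of_In _ _) ft q hq).
move=> i; rewrite -(class_vsum_distinct eqG_refl eqG_sym dt hq) gt -class_vsum_map //.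
apply: Lg_class_vsums_eq0; last by rewrite -linear_vsum // -ex hx.
by apply: fam_of_map hs => p /=; apply: hgr.
Qed.

Definition homogeneous_decomp (P : L -> Prop) := forall x, P x ->
  exists t, fam_of (fun g v => Lg g v /\ P v) t /\ x = vsum t.

Lemma br_homogeneous_ind (S P Q : L -> Prop) :
  subspace S -> homogeneous_decomp P -> homogeneous_decomp Q ->
  (forall g g' x y, Lg g x -> P x -> Lg g' y -> Q y -> S (br x y)) ->
  forall x y, P x -> Q y -> S (br x y).
Proof.
move=> sS dP dQ h x y px qy.
have inner g x' : Lg g x' -> P x' -> S (br x' y).
  move=> gx px'; have [t [ht ->]] := dQ y qy.
  rewrite (linear_vsum _ (linear_brr x')).
  apply: (subspace_vsum sS (R := fun _ z => S z)) => //.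
  by apply: fam_of_map ht => p [h1 h2] /=; apply: h gx px' h1 h2.
have [t [ht ->]] := dP x px.
rewrite (linear_vsum _ (linear_brl y)).
apply: (subspace_vsum sS (R := fun _ z => S z)) => //.
by apply: fam_of_map ht => p [h1 h2] /=; apply: inner h1 h2.
Qed.

Lemma Lg_psi g x : Lg g x -> Lg g (psi x).
Proof.
move=> hx; have [s [hs e]] := Lg_seq (psi x).
set E := fun g h : G => g = h.
have hphi : fam_of Lg ((g, - x) :: [seq (p.1, phi p.2) | p <- s]).
  constructor; first exact: subspaceN (Lg_subspace g) _.
  by apply: fam_of_map hs => p; apply: Lg_phi.
have hsum : vsum ((g, - x) :: [seq (p.1, phi p.2) | p <- s]) = 0.
  by rewrite /= -(linear_vsum _ phi_linear) -e psiK addNr.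
have hj j : j <> g -> class_vsum E s j = 0.
  move=> hne; apply: phi_inj; rewrite phi0 -(class_vsum_map _ _ _ phi_linear).
  have := Lg_class_vsums_eq0 hphi hsum j.
  by rewrite class_vsum_cons classicbF ?add0r // => he; apply: hne.
set a := fun p : G * L => classicb (E p.1 g).
rewrite e (vsum_filter a) (vsum_Lg_eq0_of_classes (fam_of_filter (predC a) hs)) ?addr0.
  apply: (subspace_vsum (Lg_subspace g) (R := fun i v => Lg i v /\ i = g)) => [i v [? <-] //|].
  by apply/fam_of_In => q /In_filter [/(proj1 (fam_of_In _ _) hs) hq /classicbP].
move=> j; rewrite /class_vsum -filter_predI.
case: (classicbP (j = g)) => [->|hjg].
  by apply: vsum_eq0; apply/fam_of_In => q /In_filter [_ /andP [/classicbP hq /negP []]]; apply/classicbP.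
rewrite -(hj j hjg) /class_vsum; congr vsum; apply: eq_filter => q /=.
by case: (classicbP (E q.1 j)) => //= hq; apply/negP => /classicbP hq'; apply: hjg; rewrite -hq -hq'.
Qed.

Lemma H0_phi h : H0 h -> H0 (phi h).
Proof. by case=> h1 h2; split; [apply: H_phi | apply: Lg_phi]. Qed.

Lemma H0_psi h : H0 h -> H0 (psi h).
Proof. by case=> h1 h2; split; [apply: H_psi | apply: Lg_psi]. Qed.

Lemma H0_iter n h : H0 h -> H0 (iter n psi h).
Proof. by move=> hh; elim: n => [|n IH] //=; apply: H0_psi. Qed.

Lemma H0_lin c h h' : H0 h -> H0 h' -> H0 (c *: h + h').
Proof.
case=> a1 a2 [b1 b2]; split; first by case: H_subspace => _; apply.
by case: (Lg_subspace 0) => _; apply.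
Qed.

(** ** Root spaces *)

Lemma Lroot_subspace a : subspace (Lroot a).
Proof.
split; first by move=> h hh; rewrite br0r phi0 scaler0.
move=> c x y hx hy h hh; rewrite brDr brZr hx // hy // phi_linear.
by rewrite scalerDr !scalerA mulrC.
Qed.

Lemma Lroot_eqH0 a b v : eqH0 a b -> Lroot a v -> Lroot b v.
Proof. by move=> e hv h hh; rewrite -e // hv. Qed.

Lemma Lroot_phi a v : Lroot a v -> Lroot (phin a 1) (phi v).
Proof. by move=> hv h hh; rewrite -{1}(psiK h) -phi_br hv ?phiZ //; exact: H0_psi. Qed.

Lemma Lroot_psi a v : Lroot a v -> Lroot (fun h => a (phi h)) (psi v).
Proof.
move=> hv h hh; rewrite -{1}(phiK h) -psi_br hv; last exact: H0_phi.
by rewrite (linear_mapZ _ _ psi_linear) phiK psiK.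
Qed.

Lemma H_Lroot0 x : H x -> Lroot (fun _ => 0) x.
Proof. by move=> hx h [hh _]; rewrite H_abelian ?scale0r. Qed.

Lemma Lroot_homogeneous a : homogeneous_decomp (Lroot a).
Proof.
move=> x hx.
pose f (h : {h | H0 h}) (v : L) := br (sval h) v - a (sval h) *: phi v.
have flin i : linear_map (f i).
  case: i => h hh c u v; rewrite /f /= brDr brZr phi_linear.
  by rewrite scalerDr scalerBr !scalerA mulrC addrACA opprD.
have fgr i g v : Lg g v -> Lg g (f i v).
  case: i => h hh hv; rewrite /f /=; apply: subspaceB (Lg_subspace g) _ _.
    by have := Lg_br (proj2 hh) hv; rewrite add0r.
  by apply: subspaceZ (Lg_subspace g) _; apply: Lg_phi.
have fx i : f i x = 0 by case: i => h hh; rewrite /f /= hx // subrr.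
have [t [ht ->]] := homogeneous_kernel_decomp flin fgr fx.
exists t; split => //; apply: fam_of_impl ht => g v [h1 h2].
split => // h hh; have := h2 (exist _ h hh); rewrite /f /=.
by move/eqP; rewrite subr_eq0 => /eqP.
Qed.

(** Jacobi identity for [psi h] in [H_0], [u] and [w]. *)
Lemma br_Lroot_homogeneous a b u w g g' : Lg g u -> Lroot a u -> Lg g' w -> Lroot b w ->
  Lroot (fun h => a (psi h) + b (psi h)) (br u w).
Proof.
move=> gu ru gw rw h hh.
have hh' := H0_psi hh; set h' := psi h in hh' *.
have eh : h = phi h' by rewrite /h' psiK.
have J := br_jacobi (proj2 hh') gu gw.
rewrite eps0r eps0l !scale1r in J.
have e1 : br w h' = - (b h' *: phi w) by rewrite (br_skew gw (proj2 hh')) eps0r scale1r rw.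
have e2 : br h' u = a h' *: phi u by rewrite ru.
have e3 : br (phi w) (phi u) = - (eps g' g *: br (phi u) (phi w)).
  exact: br_skew (Lg_phi gw) (Lg_phi gu).
rewrite e1 e2 brNr !brZr e3 !scalerN !scalerA mulrAC eps_inv mul1r in J.
have {}J : br (phi h') (br u w) = b h' *: br (phi u) (phi w) + a h' *: br (phi u) (phi w).
  by apply/eqP; rewrite -subr_eq0 opprD addrA J.
by rewrite {1}eh J phi_br scalerDl addrC.
Qed.

Lemma br_Lroot a b u w : Lroot a u -> Lroot b w ->
  Lroot (fun h => a (psi h) + b (psi h)) (br u w).
Proof.
apply: br_homogeneous_ind; [exact: Lroot_subspace | exact: Lroot_homogeneous | exact: Lroot_homogeneous |].
by move=> g g' x y gx px gy py; exact: (br_Lroot_homogeneous gx px gy py).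
Qed.



Lemma eqH0_refl a : eqH0 a a.
Proof. by []. Qed.

Lemma eqH0_sym a b : eqH0 a b -> eqH0 b a.
Proof. by move=> e h hh; rewrite e. Qed.

Lemma eqH0_trans a b c : eqH0 a b -> eqH0 b c -> eqH0 a c.
Proof. by move=> e1 e2 h hh; rewrite e1 // e2. Qed.

Lemma isRoot_eqH0 a b : eqH0 a b -> isRoot a -> isRoot b.
Proof.
move=> e [l [[h [hh nz]] [v [nv hv]]]]; split; [|split].
- by move=> c x y hx hy; rewrite -!e ?l //; apply: H0_lin.
- by exists h; split => //; rewrite -e.
- by exists v; split => //; apply: Lroot_eqH0 hv.
Qed.

Lemma isRoot_psi a : isRoot a -> isRoot (phin a 1).
Proof.
move=> [l [[h [hh nz]] [v [nv hv]]]]; split; [|split].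
- by move=> c x y hx hy; rewrite /phin /= psi_linear // l //; exact: H0_psi.
- by exists (phi h); split; [apply: H0_phi | rewrite /phin /= phiK].
- exists (phi v); split; last exact: Lroot_phi.
  by apply: contra nv => /eqP e; apply/eqP; apply: phi_inj; rewrite e phi0.
Qed.

Lemma isRoot_phi a : isRoot a -> isRoot (fun h => a (phi h)).
Proof.
move=> [l [[h [hh nz]] [v [nv hv]]]]; split; [|split].
- by move=> c x y hx hy; rewrite phi_linear l //; exact: H0_phi.
- by exists (psi h); split; [apply: H0_psi | rewrite psiK].
- exists (psi v); split; last exact: Lroot_psi.
  apply: contra nv => /eqP e; apply/eqP; apply: (can_inj psiK).
  by rewrite e (linear_map0 psi_linear).
Qed.

Lemma isRoot_phin a n : isRoot a -> isRoot (phin a n).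
Proof.
move=> ha; elim: n => [|n IH]; first by apply: isRoot_eqH0 ha => h _.
apply: isRoot_eqH0 (isRoot_psi IH).
by move=> h _; rewrite /phin !iterSr.
Qed.

Definition root_vec (a : L -> K) (v : L) := isRoot a /\ Lroot a v.

Let root_vec_eqH0 i j x : eqH0 i j -> root_vec i x -> root_vec j x.
Proof. by move=> e [h1 h2]; split; [apply: isRoot_eqH0 e h1 | apply: Lroot_eqH0 e h2]. Qed.

Let root_vecD i x y : root_vec i x -> root_vec i y -> root_vec i (x + y).
Proof. by move=> [h1 h2] [_ h3]; split => //; apply: subspaceD (Lroot_subspace i) _ _. Qed.

Lemma split_decomp x : exists h s, [/\ H h, fam_of root_vec s & x = h + vsum s].
Proof.
have [h [v [hh [hv ->]]]] := hsplit.1 x.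
by have [s [hs ->]] := (fam_sum_seq _ _ _).1 hv; exists h, s.
Qed.

Lemma split_indep h s : H h -> fam_of root_vec s -> h + vsum s = 0 ->
  h = 0 /\ forall j, class_vsum eqH0 s j = 0.
Proof.
move=> hh hs e; pose d0 : (L -> K) * L := (fun _ => 0, 0).
have [t [dt ft st gt _]] := regroup_classes eqH0_refl eqH0_sym eqH0_trans root_vec_eqH0 root_vecD hs.
case: (hsplit.2 (size t) h (fun k => (nth d0 t k).1) (fun k => (nth d0 t k).2) hh).
- by move=> k; apply: (fam_of_nth (R := root_vec)).
- by move=> k l hkl; apply: (distinct_classes_nth (E := eqH0)) => //; exact: eqH0_sym.
- by rewrite -(vsum_nth d0) st.
move=> -> hz; split => // j; rewrite -gt; apply: class_vsum_eq0.
by apply/fam_of_In => p /(nth_of_In d0) [k hk ->]; exact: (hz (Ordinal hk)).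
Qed.

Lemma vsum_root_vec_eq0 s : fam_of root_vec s ->
  (forall j, class_vsum eqH0 s j = 0) -> vsum s = 0.
Proof. exact: (vsum_eq0_of_classes eqH0_refl eqH0_sym eqH0_trans root_vec_eqH0 root_vecD). Qed.

(** The family [[h0, v]], [v] in [s]: a root vector of root [a] becomes one of
    root [a phi^-1], rescaled by [a h0]. *)
Lemma class_vsum_br_H0 s h0 j : fam_of root_vec s -> H0 h0 ->
  class_vsum eqH0 [seq (phin p.1 1, p.1 h0 *: phi p.2) | p <- s] (phin j 1)
  = j h0 *: phi (class_vsum eqH0 s j).
Proof.
move=> hs hh0; have lin : linear_map (fun v => j h0 *: phi v).
  by move=> c u v; rewrite phi_linear scalerDr !scalerA mulrC.
rewrite -(class_vsum_map _ _ _ lin) /class_vsum !filter_map.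
have -> : [seq x <- s | preim (fun p : (L -> K) * L => (phin p.1 1, p.1 h0 *: phi p.2))
             (fun p => classicb (eqH0 p.1 (phin j 1))) x] =
          [seq x <- s | classicb (eqH0 x.1 j)].
  apply: eq_filter => p /=; apply/classicbP/classicbP => e h1 hh1.
    by have := e (phi h1) (H0_phi hh1); rewrite /phin /= phiK.
  by rewrite /phin /= e //; apply: H0_psi.
by apply: vsum_eq_in => p /In_filter [hp /classicbP e] /=; rewrite e.
Qed.

Lemma Lroot0_H x : Lroot (fun _ => 0) x -> H x.
Proof.
move=> hx; have [h [s [hh hs ex]]] := split_decomp x.
suff e : vsum s = 0 by rewrite ex e addr0.
apply: vsum_root_vec_eq0 => // j; case: (classic (isRoot j)) => hj; last first.
  apply: class_vsum_out; apply/List.Forall_forall => p hp he; apply: hj.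
  by apply: isRoot_eqH0 he _; case: (proj1 (fam_of_In _ _) hs p hp).
(* [[h0, x] = 0], and its part of class [j phi^-1] is [j h0 *: phi] of the
   class-[j] part of [x]. *)
have [_ [[h0 [hh0 nz]] _]] := hj.
suff : j h0 *: phi (class_vsum eqH0 s j) = 0.
  by move/eqP; rewrite scaler_eq0 (negbTE nz) /= => /eqP e; apply: phi_inj; rewrite e phi0.
rewrite -class_vsum_br_H0 //.
set s' := map _ s.
have hs' : fam_of root_vec s'.
  apply: fam_of_map hs => p [r1 r2] /=; split; first exact: isRoot_psi.
  by apply: subspaceZ (Lroot_subspace _) _; apply: Lroot_phi.
apply: (split_indep (subspace0 H_subspace) hs' _).2.
rewrite add0r; transitivity (br h0 x); last by rewrite hx // scale0r.
rewrite ex brDr H_abelian ?add0r; [|exact: hh0.1|exact: hh].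
rewrite (linear_vsum _ (linear_brr _)); apply: vsum_eq_in => p hp /=.
by case: (proj1 (fam_of_In _ _) hs p hp) => _ ->.
Qed.

Lemma br_Lroot_cases a b u w : isRoot a -> isRoot b -> Lroot a u -> Lroot b w ->
  [\/ br u w = 0,
      eqH0 (fun h => a h + b h) (fun _ => 0) /\ H (br u w) |
      root_vec (fun h => a (psi h) + b (psi h)) (br u w)].
Proof.
move=> [la _] [lb _] hu hw; have hc := br_Lroot hu hw.
case: (classic (eqH0 (fun h => a h + b h) (fun _ => 0))) => hab.
  apply: Or32; split => //; apply: Lroot0_H; apply: Lroot_eqH0 hc.
  by move=> h hh; apply: hab; apply: H0_psi.
case: (classic (br u w = 0)) => hz; [exact: Or31 | apply: Or33].
split => //; split; [|split].
- move=> c x y hx hy; rewrite psi_linear la ?lb; try exact: H0_psi.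
  by rewrite mulrDr addrACA.
- apply: NNPP => hn; apply: hab => h hh; apply: NNPP => hne; apply: hn.
  by exists (phi h); split; [apply: H0_phi | rewrite phiK; apply/eqP].
- by exists (br u w); split => //; apply/eqP.
Qed.

(** ** Connectedness as reachability *)

Lemma isRoot_opp a : isRoot a -> isRoot (oppf a).
Proof. exact: hsym. Qed.

Lemma phin_psi a n h : phin a n (psi h) = phin a n.+1 h.
Proof. by rewrite /phin iterSr. Qed.

Lemma phin_eqH0 a b n : eqH0 a b -> eqH0 (phin a n) (phin b n).
Proof. by move=> e h hh; rewrite /phin e //; apply: H0_iter. Qed.

Lemma phinD a n m : eqH0 (phin (phin a n) m) (phin a (n + m)).
Proof. by move=> h hh; rewrite /phin iterD. Qed.

Definition sgn (b : bool) (f : L -> K) : L -> K := if b then oppf f else f.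

Lemma sgn_eqH0 b f g : eqH0 f g -> eqH0 (sgn b f) (sgn b g).
Proof. by case: b => e h hh //=; rewrite /oppf e. Qed.

Lemma sgnK b1 b2 f : eqH0 (sgn b1 (sgn b2 f)) (sgn (b1 (+) b2) f).
Proof. by case: b1; case: b2 => h hh //=; rewrite /oppf opprK. Qed.

Lemma phin_sgn b f n : eqH0 (phin (sgn b f) n) (sgn b (phin f n)).
Proof. by case: b. Qed.

Lemma isRoot_sgn b f : isRoot f -> isRoot (sgn b f).
Proof. by case: b => //; apply: isRoot_opp. Qed.

(** [reach S T]: [T] is obtained from [S] by successive steps
    [T |-> (T + c) phi^-1] through roots; these are the partial sums [Ssum]
    of the definition of connectedness. *)
Inductive reach : (L -> K) -> (L -> K) -> Prop :=
| reach_refl S T : eqH0 S T -> reach S T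
| reach_step S T T' c : reach S T -> isRoot c -> isRoot T' ->
    eqH0 T' (fun h => T (psi h) + c (psi h)) -> reach S T'.

Lemma reach_isRoot S T : isRoot S -> reach S T -> isRoot T.
Proof. by move=> hS r; elim: r hS => [S0 T0 e hS|//]; apply: isRoot_eqH0 e hS. Qed.

Lemma reach_eqH0r S T T' : reach S T -> eqH0 T T' -> reach S T'.
Proof.
case=> [S0 T0 e e'|S0 T0 T1 c r hc hT1 e e'].
  by apply: reach_refl; apply: eqH0_trans e e'.
apply: reach_step r hc _ _; first exact: isRoot_eqH0 e' hT1.
exact: eqH0_trans (eqH0_sym e') e.
Qed.

Lemma reach_eqH0l S S' T : eqH0 S' S -> reach S T -> reach S' T.
Proof.
move=> e r; elim: r S' e => [S0 T0 e0 S' e|S0 T0 T1 c r IH hc hT1 e1 S' e].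
  by apply: reach_refl; apply: eqH0_trans e e0.
exact: reach_step (IH S' e) hc hT1 e1.
Qed.

Lemma reach_trans S T U : reach S T -> reach T U -> reach S U.
Proof.
move=> r1 r2; elim: r2 r1 => [T0 U0 e r1|T0 U0 U1 c r IH hc hU e r1].
  exact: reach_eqH0r r1 e.
exact: reach_step (IH r1) hc hU e.
Qed.

Lemma reach_phin S T u : reach S T -> reach (phin S u) (phin T u).
Proof.
elim => [S0 T0 e|S0 T0 T1 c r IH hc hT1 e].
  by apply: reach_refl; apply: phin_eqH0.
apply: reach_step IH (isRoot_phin u hc) (isRoot_phin u hT1) _.
move=> h hh; rewrite /phin e; last exact: H0_iter.
by rewrite -iterSr iterS.
Qed.

Lemma reach_sgn b S T : reach S T -> reach (sgn b S) (sgn b T).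
Proof.
elim => [S0 T0 e|S0 T0 T1 c r IH hc hT1 e].
  by apply: reach_refl; apply: sgn_eqH0.
apply: reach_step IH (isRoot_sgn b hc) (isRoot_sgn b hT1) _.
by case: b => h hh /=; rewrite /oppf e // ?opprD.
Qed.

(** A step [T |-> (T + c) phi^-1] is undone by the step with [-c phi^-1],
    at the price of two more powers of [phi^-1]. *)
Lemma reach_rev S T : isRoot S -> reach S T ->
  forall u, exists v, reach (phin T u) (phin S v).
Proof.
move=> hS r; elim: r hS => [S0 T0 e|S0 T0 T1 c r IH hc hT1 e] hS u.
  by exists u; apply: reach_refl; apply: phin_eqH0; apply: eqH0_sym.
have [v hv] := IH hS u.+2; exists v; apply: reach_trans hv.
apply: (reach_step (T := phin T1 u) (c := oppf (phin c u.+1))).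
- exact/reach_refl/eqH0_refl.
- by apply: isRoot_opp; apply: isRoot_phin.
- exact: isRoot_phin (reach_isRoot hS r).
- move=> h hh; rewrite /oppf !phin_psi.
  have -> : phin T1 u.+1 h = phin T0 u.+2 h + phin c u.+2 h.
    by rewrite {1}/phin e //; apply: H0_iter.
  by rewrite addrK.
Qed.

Definition conn (al be : L -> K) : Prop :=
  exists S T n m (b : bool),
    [/\ isRoot S, eqH0 S (phin al n), reach S T & eqH0 T (sgn b (phin be m))].

Lemma conn_refl a : isRoot a -> conn a a.
Proof. by move=> ha; exists a, a, 0%N, 0%N, false; split => //; apply: reach_refl. Qed.

Lemma conn_sym a b : conn a b -> conn b a.
Proof.
case=> S [T [n [m [sg [hS eS r eT]]]]].
have [v hv] := reach_rev hS r 0.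
exists (sgn sg T), (sgn sg (phin S v)), m, (v + n)%N, sg; split.
- exact/isRoot_sgn/(reach_isRoot hS r).
- apply: eqH0_trans (sgn_eqH0 sg eT) _.
  by apply: eqH0_trans (sgnK _ _ _) _; rewrite addbb.
- exact: reach_sgn.
- apply: sgn_eqH0; apply: eqH0_trans (phin_eqH0 v eS) _.
  by move=> h hh; rewrite /phin -iterD addnC.
Qed.

Lemma conn_trans a b c : conn a b -> conn b c -> conn a c.
Proof.
case=> S1 [T1 [n1 [m1 [s1 [hS1 eS1 r1 eT1]]]]].
case=> S2 [T2 [n2 [m2 [s2 [hS2 eS2 r2 eT2]]]]].
exists (phin S1 n2), (sgn s1 (phin T2 m1)), (n1 + n2)%N, (m2 + m1)%N, (s1 (+) s2).
split.
- exact: isRoot_phin.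
- by apply: eqH0_trans (phin_eqH0 n2 eS1) _; apply: phinD.
- apply: reach_trans (reach_phin n2 r1) _.
  apply: reach_eqH0l (reach_sgn s1 (reach_phin m1 r2)).
  apply: eqH0_trans (phin_eqH0 n2 eT1) _.
  apply: eqH0_trans (phin_sgn _ _ _) _; apply: sgn_eqH0.
  apply: eqH0_trans (phinD _ _ _) _; apply: eqH0_sym.
  apply: eqH0_trans (phin_eqH0 m1 eS2) _.
  by apply: eqH0_trans (phinD _ _ _) _; rewrite addnC.
- apply: eqH0_trans (sgn_eqH0 s1 (phin_eqH0 m1 eT2)) _.
  apply: eqH0_trans (sgn_eqH0 s1 (phin_sgn _ _ _)) _.
  apply: eqH0_trans (sgnK _ _ _) _; apply: sgn_eqH0; exact: phinD.
Qed.

Lemma conn_eqH0l a a' b : eqH0 a a' -> conn a b -> conn a' b.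
Proof.
move=> e [S [T [n [m [sg [hS eS r eT]]]]]].
by exists S, T, n, m, sg; split => //; exact: eqH0_trans eS (phin_eqH0 n e).
Qed.

Lemma conn_eqH0r a b b' : eqH0 b b' -> conn a b -> conn a b'.
Proof.
move=> e [S [T [n [m [sg [hS eS r eT]]]]]].
by exists S, T, n, m, sg; split => //; exact: eqH0_trans eT (sgn_eqH0 sg (phin_eqH0 m e)).
Qed.

Lemma conn_psi a : isRoot a -> conn (phin a 1) a.
Proof.
move=> ha; exists (phin a 1), (phin a 1), 0%N, 1%N, false.
by split => //; [exact: isRoot_psi | exact: reach_refl].
Qed.

Lemma conn_phi a : isRoot a -> conn (fun h => a (phi h)) a.
Proof.
move=> ha; exists a, a, 1%N, 0%N, false; split => //; last exact: reach_refl.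
by move=> h hh; rewrite /phin /= psiK.
Qed.

Lemma conn_opp a : isRoot a -> conn a (oppf a).
Proof.
move=> ha; exists a, a, 0%N, 0%N, true; split => //; first exact: reach_refl.
by move=> h hh; rewrite /= /oppf /phin /= opprK.
Qed.

Lemma conn_sum a b : isRoot a -> isRoot b ->
  isRoot (fun h => a (psi h) + b (psi h)) -> conn a (fun h => a (psi h) + b (psi h)).
Proof.
move=> ha hb hc; exists a, (fun h => a (psi h) + b (psi h)), 0%N, 0%N, false.
by split => //; apply: reach_step (reach_refl (eqH0_refl a)) hb hc _.
Qed.

Local Notation Ssum := (Ssum psi).
Local Notation connected := (connected Lg H br phi psi).

Lemma Ssum0 (a : nat -> L -> K) h : Ssum a 0 h = a 1%N h.
Proof. by rewrite /Ssum big_geq // addr0. Qed.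

Lemma SsumS (a : nat -> L -> K) i h :
  Ssum a i.+1 h = Ssum a i (psi h) + a i.+2 (psi h).
Proof.
rewrite /Ssum big_nat_recr //= subSnn phin_psi -!addrA; congr (_ + _).
congr (_ + _); apply: eq_big_nat => j /andP [_ hj].
by rewrite phin_psi subSn // ltnW.
Qed.

Lemma connected_conn al be : isRoot be -> connected al be -> conn al be.
Proof.
move=> hb [k [a [hk [ha [[n hn] [hi [m hm]]]]]]].
have reach_Ssum i : (i <= k - 1)%N -> reach (a 1%N) (Ssum a i).
  elim: i => [|i IH] hi'; first by apply: reach_refl => h _; rewrite Ssum0.
  apply: (reach_step (IH (ltnW hi')) (ha i.+2 _)).
  - by apply/andP; split => //; lia.
  - case: (leqP i.+1 (k - 2)) => hh; first by apply: hi; apply/andP.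
    have -> : i.+1 = (k - 1)%N by lia.
    by case: hm => e; apply: isRoot_eqH0 (eqH0_sym e) (isRoot_phin m _);
      [exact: hb | exact: isRoot_opp].
  - by move=> h _; rewrite SsumS.
have ha1 : isRoot (a 1%N) by apply: ha; apply/andP.
by case: hm => e; [exists (a 1%N), (Ssum a (k - 1)), n, m, false |
  exists (a 1%N), (Ssum a (k - 1)), n, m, true]; split => //; apply: reach_Ssum.
Qed.

Lemma reach_Ssum_chain S T : isRoot S -> reach S T ->
  exists k (a : nat -> L -> K), [/\ (1 <= k)%N, forall j, (1 <= j <= k)%N -> isRoot (a j),
    a 1%N = S, forall i, (1 <= i <= k - 2)%N -> isRoot (Ssum a i) &
    eqH0 (Ssum a (k - 1)) T].
Proof.
move=> hS r; elim: r hS => [S0 T0 e|S0 T0 T1 c r IH hc hT1 e] hS.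
  exists 1%N, (fun _ => S0); split => //; first by move=> i /andP [h1 h2]; lia.
  by move=> h hh; rewrite Ssum0 e.
have [k [a [hk ha a1 hi hT]]] := IH hS.
pose a' j := if j == k.+1 then c else a j.
have same i : (i <= k - 1)%N -> forall h, Ssum a' i h = Ssum a i h.
  elim: i => [|i IHi] hi' h; first by rewrite !Ssum0 /a' ifN //; lia.
  by rewrite !SsumS IHi; [rewrite /a' ifN //; lia | lia].
exists k.+1, a'; split => //.
- move=> j /andP [h1 h2]; rewrite /a'; case: eqP => // hne.
  by apply: ha; apply/andP; split => //; lia.
- by rewrite /a' ifN //; lia.
- move=> i /andP [h1 h2]; case: (leqP i (k - 2)) => hh.
    by apply: isRoot_eqH0 (hi i _) => [h _|]; [rewrite same //; lia | apply/andP].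
  have -> : i = (k - 1)%N by lia.
  apply: isRoot_eqH0 (reach_isRoot hS r); apply: eqH0_sym; apply: eqH0_trans hT.
  by move=> h _; rewrite same.
- have -> : (k.+1 - 1)%N = (k - 1).+1 by lia.
  move=> h hh; rewrite SsumS same // hT; last exact: H0_psi.
  have -> : (k - 1).+2 = k.+1 by lia.
  by rewrite /a' eqxx e.
Qed.

Lemma conn_connected al be : conn al be -> connected al be.
Proof.
case=> S [T [n [m [sg [hS eS r eT]]]]].
have [k [a [hk ha a1 hi hT]]] := reach_Ssum_chain hS r.
exists k, a; split => //; split => //; split; first by exists n; rewrite a1.
split => //; exists m; case: sg eT => eT; [right | left]; exact: eqH0_trans hT eT.
Qed.

Lemma connectedE al be : isRoot be -> connected al be <-> conn al be.
Proof. by move=> hb; split; [exact: connected_conn | exact: conn_connected]. Qed.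

(** ** The subspaces [H_{Lambda_a}], [V_{Lambda_a}] and [I_[a]] *)

Local Notation LambdaClass := (LambdaClass Lg H br phi psi).
Local Notation HLambda := (HLambda Lg H br phi psi).
Local Notation VLambda := (VLambda Lg H br phi psi).
Local Notation Iclass := (Iclass Lg H br phi psi).

Lemma LambdaClassE al b : isRoot al -> LambdaClass al b <-> isRoot b /\ conn b al.
Proof. by move=> ha; split; case=> hb hc; split => //; apply/connectedE. Qed.

Lemma LambdaClass_refl a : isRoot a -> LambdaClass a a.
Proof. by move=> ha; apply/LambdaClassE => //; split => //; apply: conn_refl. Qed.

(** Generators of a span of brackets, indexed by [unit] so that [fam_sum] applies. *)
Definition bracket_gen (Q : L -> L -> Prop) (_ : unit) (v : L) :=
  exists c u w, Q u w /\ v = c *: br u w.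

Lemma span_brackets_fam Q x :
  span_brackets br Q x <-> fam_sum (fun _ => True) (bracket_gen Q) x.
Proof.
split.
  case=> n [c [u [w [hq ->]]]].
  exists n, (fun _ => tt), (fun k => c k *: br (u k) (w k)).
  by split => // k; split => //; exists (c k), (u k), (w k).
case=> n [i [v [hv ->]]].
have hk k : {p : K * L * L | Q p.1.2 p.2 /\ v k = p.1.1 *: br p.1.2 p.2}.
  apply: constructive_indefinite_description.
  by have [_ [c [u [w [h1 h2]]]]] := hv k; exists (c, u, w).
exists n, (fun k => (sval (hk k)).1.1), (fun k => (sval (hk k)).1.2),
  (fun k => (sval (hk k)).2); split; first by move=> k; case: (svalP (hk k)).
by apply: eq_bigr => k _; case: (svalP (hk k)).
Qed.

Lemma span_brackets_subspace Q : subspace (span_brackets br Q).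
Proof.
have sF : subspace (fam_sum (fun _ => True) (bracket_gen Q)).
  apply: fam_sum_subspace => i c v _ [c' [u [w [hq ->]]]].
  by exists (c * c'), u, w; split => //; rewrite scalerA.
split; first exact/span_brackets_fam/(subspace0 sF).
by move=> c x y /span_brackets_fam hx /span_brackets_fam hy; apply/span_brackets_fam; case: sF => _; apply.
Qed.

Lemma span_brackets_ind Q (S : L -> Prop) x : subspace S ->
  (forall c u w, Q u w -> S (c *: br u w)) -> span_brackets br Q x -> S x.
Proof. by move=> sS h [n [c [u [w [hq ->]]]]]; apply: subspace_sum => // k; exact: h. Qed.

Lemma HLambda_subspace al : subspace (HLambda al).
Proof. exact: span_brackets_subspace. Qed.

Lemma VLambda_subspace al : subspace (VLambda al).
Proof. by apply: fam_sum_subspace => i c v _; apply: subspaceZ (Lroot_subspace i). Qed.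

Lemma Iclass_subspace al : subspace (Iclass al).
Proof.
split; first by exists 0, 0; rewrite addr0; split;
  [exact: subspace0 (HLambda_subspace al) | split; [exact: subspace0 (VLambda_subspace al)|]].
move=> c x y [h1 [v1 [hh1 [hv1 ->]]]] [h2 [v2 [hh2 [hv2 ->]]]].
exists (c *: h1 + h2), (c *: v1 + v2); split; first by case: (HLambda_subspace al) => _; apply.
split; first by case: (VLambda_subspace al) => _; apply.
by rewrite scalerDr addrACA.
Qed.

Lemma Iclass_brl_subspace al y : subspace (fun x => Iclass al (br x y)).
Proof. exact: subspace_preim (Iclass_subspace al) (linear_brl y). Qed.

Lemma Iclass_Lroot al a v : LambdaClass al a -> Lroot a v -> Iclass al v.
Proof.
move=> ha hv; exists 0, v; rewrite add0r; split; first exact: subspace0 (HLambda_subspace al).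
by split => //; apply: fam_sum1 ha hv.
Qed.

Lemma Iclass_br_opp al b u w : LambdaClass al b -> Lroot b u -> Lroot (oppf b) w ->
  Iclass al (br u w).
Proof.
move=> hb hu hw; exists (br u w), 0; rewrite addr0; split; last first.
  by split => //; apply: subspace0 (VLambda_subspace al).
exists 1%N, (fun _ => 1), (fun _ => u), (fun _ => w).
by rewrite big_ord1 scale1r; split => // _; exists b.
Qed.

Lemma br_Lroot_opp_H a u w : Lroot a u -> Lroot (oppf a) w -> H (br u w).
Proof. by move=> hu hw; apply/Lroot0_H/(Lroot_eqH0 _ (br_Lroot hu hw)) => h _; rewrite /oppf addrN. Qed.

Lemma HLambda_H al x : HLambda al x -> H x.
Proof.
apply: span_brackets_ind; first exact: H_subspace.
move=> c u w [b [_ [hu hw]]]; exact/(subspaceZ H_subspace)/(br_Lroot_opp_H hu hw).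
Qed.

(** ** Each [I_[a]] is an ideal *)

Lemma jacobi_closed (S : L -> Prop) g1 g2 g3 x y z : subspace S ->
  Lg g1 x -> Lg g2 y -> Lg g3 z ->
  S (br (phi y) (br z x)) -> S (br (phi z) (br x y)) -> S (br (phi x) (br y z)).
Proof.
move=> sS gx gy gz h2 h3; have J := br_jacobi gx gy gz.
have {}J : eps g3 g1 *: br (phi x) (br y z) =
   - (eps g1 g2 *: br (phi y) (br z x) + eps g2 g3 *: br (phi z) (br x y)).
  by apply/eqP; rewrite -subr_eq0 opprK addrA J.
rewrite -[br (phi x) _]scale1r -(mulVf (eps_neq0 g3 g1)) -scalerA J.
by apply/(subspaceZ sS)/(subspaceN sS)/(subspaceD sS); exact: (subspaceZ sS).
Qed.

Lemma eqH0_add0_opp a b h : eqH0 (fun h => a h + b h) (fun _ => 0) -> H0 h ->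
  b h = oppf a h.
Proof. by move=> e hh; rewrite /oppf; apply/eqP; rewrite -addr_eq0 addrC; apply/eqP/e. Qed.

Lemma Iclass_br_Lroot al a u y : isRoot al -> isRoot a -> conn a al -> Lroot a u ->
  Iclass al (br u y).
Proof.
move=> hal ha hc hu; have [hy [s [hhy hs ->]]] := split_decomp y.
rewrite brDr; apply: subspaceD (Iclass_subspace al) _ _.
  apply: (Iclass_Lroot (a := phin a 1)).
    by apply/LambdaClassE => //; split; [exact: isRoot_psi | exact: conn_trans (conn_psi ha) hc].
  by apply: Lroot_eqH0 (br_Lroot hu (H_Lroot0 hhy)) => h hh; rewrite addr0.
rewrite (linear_vsum _ (linear_brr u)).
apply: (subspace_vsum (Iclass_subspace al) (R := fun _ v => Iclass al v)) => //.
apply: fam_of_map hs => p [hb hv] /=.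
case: (br_Lroot_cases ha hb hu hv) => [->|[e _]|[hr hl]].
- exact: subspace0 (Iclass_subspace al).
- apply: (Iclass_br_opp (b := a)) => //; first by apply/LambdaClassE.
  by apply: Lroot_eqH0 hv => h hh; exact: (eqH0_add0_opp e hh).
- apply: Iclass_Lroot hl; apply/LambdaClassE => //; split => //.
  by apply: conn_trans _ hc; apply: conn_sym; apply: conn_sum.
Qed.

(** For [[[u, w], y]] with [u] in [L_a], [w] in [L_-a], the Jacobi identity
    reduces to brackets of root vectors with [y]. *)
Lemma Iclass_br_HLambda al a u w y : isRoot al -> isRoot a -> conn a al -> Lroot a u ->
  Lroot (oppf a) w -> Iclass al (br (br u w) y).
Proof.
move=> hal ha hc hu hw; have [t [ht ey]] := Lg_seq (psi y).
have {}ey : y = vsum [seq (p.1, phi p.2) | p <- t] by rewrite -(linear_vsum _ phi_linear) -ey psiK.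
rewrite ey (linear_vsum _ (linear_brr _)) -map_comp.
apply: (subspace_vsum (Iclass_subspace al) (R := fun _ v => Iclass al v)) => //.
apply: fam_of_map ht => p gz /=.
apply: (br_homogeneous_ind (Iclass_brl_subspace al (phi p.2))
  (@Lroot_homogeneous a) (@Lroot_homogeneous (oppf a)) _ hu hw) => g1 g2 x x' gx px gx' px'.
rewrite (br_skew (Lg_br gx gx') (Lg_phi gz)).
apply/(subspaceN (Iclass_subspace al))/(subspaceZ (Iclass_subspace al)).
apply: (jacobi_closed (Iclass_subspace al) gz gx gx').
- exact: (Iclass_br_Lroot _ hal (isRoot_psi ha) (conn_trans (conn_psi ha) hc) (Lroot_phi px)).
- have hoa := isRoot_opp ha.
  have c2 := conn_trans (conn_psi hoa) (conn_trans (conn_sym (conn_opp ha)) hc).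
  exact: (Iclass_br_Lroot _ hal (isRoot_psi hoa) c2 (Lroot_phi px')).
Qed.

Lemma Iclass_brl al x y : isRoot al -> Iclass al x -> Iclass al (br x y).
Proof.
move=> hal [h [v [hh [hv ->]]]]; rewrite brDl; apply: subspaceD (Iclass_subspace al) _ _.
  apply: (span_brackets_ind (Iclass_brl_subspace al y)) hh => c u w [b [hb [hu hw]]].
  rewrite brZl; apply: subspaceZ (Iclass_subspace al) _.
  by case/LambdaClassE: hb => // r cb; apply: Iclass_br_HLambda hu hw.
apply: (fam_sum_ind (Iclass_brl_subspace al y)) hv => i u hi hu.
by case/LambdaClassE: hi => // r ci; apply: Iclass_br_Lroot hu.
Qed.

(** [phi] and [phi^-1] move roots along their classes. *)
Lemma Iclass_morph al (f : L -> L) (g : (L -> K) -> L -> K) x :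
  isRoot al -> linear_map f -> (forall u w, f (br u w) = br (f u) (f w)) ->
  (forall a v, Lroot a v -> Lroot (g a) (f v)) ->
  (forall a, isRoot a -> isRoot (g a) /\ conn (g a) a) ->
  (forall a, g (oppf a) = oppf (g a)) ->
  Iclass al x -> Iclass al (f x).
Proof.
move=> hal flin fbr gL gR gN [h [v [hh [hv ->]]]].
have sS := subspace_preim (Iclass_subspace al) flin.
rewrite (linear_mapD flin); apply: subspaceD (Iclass_subspace al) _ _.
  apply: (span_brackets_ind sS) hh => c u w [b [hb [hu hw]]] /=.
  rewrite linear_mapZ // fbr; apply: subspaceZ (Iclass_subspace al) _.
  case/LambdaClassE: hb => // r cb; have [gr gc] := gR b r.
  apply: (Iclass_br_opp (b := g b)); [|exact: gL|by rewrite -gN; apply: gL].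
  by apply/LambdaClassE => //; split => //; exact: conn_trans gc cb.
apply: (fam_sum_ind sS) hv => i u hi hu /=.
case/LambdaClassE: hi => // r ci; have [gr gc] := gR i r.
apply: (Iclass_Lroot (a := g i)); last exact: gL.
by apply/LambdaClassE => //; split => //; exact: conn_trans gc ci.
Qed.

Lemma Iclass_phi al x : isRoot al -> Iclass al x -> Iclass al (phi x).
Proof.
move=> hal; apply: (Iclass_morph (g := phin^~ 1%N)) => //.
- exact: phi_linear.
- exact: phi_br.
- exact: Lroot_phi.
- by move=> a ha; split; [exact: isRoot_psi | exact: conn_psi].
Qed.

Lemma Iclass_psi al x : isRoot al -> Iclass al x -> Iclass al (psi x).
Proof.
move=> hal; apply: (Iclass_morph (g := fun a h => a (phi h))) => //.
- exact: psi_linear.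
- exact: psi_br.
- exact: Lroot_psi.
- by move=> a ha; split; [exact: isRoot_phi | exact: conn_phi].
Qed.

Lemma Iclass_graded al x : isRoot al -> Iclass al x ->
  fam_sum (fun _ => True) (fun g y => Lg g y /\ Iclass al y) x.
Proof.
move=> hal [h [v [hh [hv ->]]]].
pose S := fam_sum (fun _ : G => True) (fun g y => Lg g y /\ Iclass al y).
have sS : subspace S.
  apply: fam_sum_subspace => g c y _ [h1 h2].
  by split; [apply: subspaceZ (Lg_subspace g) _ | apply: subspaceZ (Iclass_subspace al) _].
apply: (subspaceD sS).
  apply: (span_brackets_ind sS) hh => c u w [b [hb [hu hw]]]; apply: (subspaceZ sS).
  apply: (br_homogeneous_ind sS (@Lroot_homogeneous b) (@Lroot_homogeneous (oppf b))) => //.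
  move=> g1 g2 x' y' gx px gy py; apply: (fam_sum1 (i := g1 + g2)) => //.
  by split; [apply: Lg_br | apply: Iclass_br_opp hb px py].
apply: (fam_sum_ind sS) hv => i u hi hu.
have [t [ht ->]] := Lroot_homogeneous hu.
apply: (subspace_vsum sS (R := fun g v => Lg g v /\ Lroot i v)) => // g y [h1 h2].
by apply: (fam_sum1 (i := g)) => //; split => //; apply: Iclass_Lroot hi h2.
Qed.

Lemma Iclass_ideal al : isRoot al -> ideal Lg br phi (Iclass al).
Proof.
move=> hal; split; first by split; [apply: Iclass_subspace | move=> x; apply: Iclass_graded].
split; first by move=> x y; apply: Iclass_brl.
split; first by move=> x; apply: Iclass_phi.
by move=> x hx; exists (psi x); split; [apply: Iclass_psi | rewrite psiK].
Qed.

(** ** Ideals of disconnected classes annihilate each other *)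

Lemma br_eq0l_subspace y : subspace (fun x => br x y = 0).
Proof. exact: subspace_preim subspace_eq0 (linear_brl y). Qed.

Lemma br_eq0r_subspace x : subspace (fun y => br x y = 0).
Proof. exact: subspace_preim subspace_eq0 (linear_brr x). Qed.

Lemma br_Lroot_disconnected a b u w : isRoot a -> isRoot b -> ~ conn a b ->
  Lroot a u -> Lroot b w -> br u w = 0.
Proof.
move=> ha hb nab hu hw; case: (br_Lroot_cases ha hb hu hw) => [//|[e _]|[hr _]].
  case: nab; apply: (conn_eqH0r (b := oppf a)); last exact: conn_opp.
  by move=> h hh; rewrite (eqH0_add0_opp e hh).
have hr' : isRoot (fun h => b (psi h) + a (psi h)).
  by apply: isRoot_eqH0 hr => h _; rewrite addrC.
case: nab; apply: conn_trans (conn_sum ha hb hr) _; apply: conn_sym.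
by apply: conn_eqH0r (conn_sum hb ha hr') => h _; rewrite addrC.
Qed.

Lemma br_HLambda_Lroot_homogeneous a b u w z g1 g2 g3 : isRoot a -> isRoot b -> ~ conn a b ->
  Lg g1 u -> Lroot a u -> Lg g2 w -> Lroot (oppf a) w -> Lg g3 z -> Lroot b z ->
  br (br u w) z = 0 /\ br z (br u w) = 0.
Proof.
move=> ha hb nab gu hu gw hw gz hz.
have hb' := isRoot_phi hb.
have e1 : br w (psi z) = 0.
  apply: (br_Lroot_disconnected (isRoot_opp ha) hb') hw (Lroot_psi hz) => C; apply: nab.
  exact: conn_trans (conn_opp ha) (conn_trans C (conn_phi hb)).
have e2 : br (psi z) u = 0.
  apply: (br_Lroot_disconnected hb' ha) (Lroot_psi hz) hu => C; apply: nab; apply: conn_sym.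
  exact: conn_trans (conn_sym (conn_phi hb)) C.
have J : br (phi (psi z)) (br u w) = 0.
  by apply: (jacobi_closed subspace_eq0 (Lg_psi gz) gu gw); rewrite ?e1 ?e2 br0r.
rewrite psiK in J; split => //.
by rewrite (br_skew (Lg_br gu gw) gz) J scaler0 oppr0.
Qed.

Lemma br_HLambda_Lroot_disconnected a b u w z : isRoot a -> isRoot b -> ~ conn a b ->
  Lroot a u -> Lroot (oppf a) w -> Lroot b z ->
  br (br u w) z = 0 /\ br z (br u w) = 0.
Proof.
move=> ha hb nab hu hw hz; have [t [ht ->]] := Lroot_homogeneous hz.
have sS : subspace (fun z => br (br u w) z = 0 /\ br z (br u w) = 0).
  exact: subspaceI (br_eq0r_subspace _) (br_eq0l_subspace _).
apply: (subspace_vsum sS (R := fun g v => Lg g v /\ Lroot b v)) => // g z' [gz hz'].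
have sS' : subspace (fun v => br v z' = 0 /\ br z' v = 0).
  exact: subspaceI (br_eq0l_subspace _) (br_eq0r_subspace _).
apply: (br_homogeneous_ind sS' (@Lroot_homogeneous a) (@Lroot_homogeneous (oppf a)) _ hu hw).
by move=> g1 g2 x y gx px gy py; exact: br_HLambda_Lroot_homogeneous gx px gy py gz hz'.
Qed.

Lemma br_Lroot_Iclass a be u y : isRoot a -> isRoot be -> ~ conn a be ->
  Lroot a u -> Iclass be y -> br u y = 0.
Proof.
move=> ha hbe nab hu [hy [vy [hhy [hvy ->]]]].
have nab' b : isRoot b -> conn b be -> ~ conn a b.
  by move=> _ cb C; apply: nab; apply: conn_trans C cb.
rewrite brDr; have -> : br u hy = 0.
  apply: (span_brackets_ind (br_eq0r_subspace u)) hhy => c u' w' [b [hb [hu' hw']]].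
  case/LambdaClassE: hb => // rb cb.
  rewrite brZr (br_HLambda_Lroot_disconnected rb ha _ hu' hw' hu).2 ?scaler0 //.
  by move=> C; apply: (nab' b rb cb); apply: conn_sym.
rewrite add0r; apply: (fam_sum_ind (br_eq0r_subspace u)) hvy => b z hb hz.
by case/LambdaClassE: hb => // rb cb; exact: br_Lroot_disconnected ha rb (nab' b rb cb) hu hz.
Qed.

Lemma br_HLambda_Iclass a be u w y : isRoot a -> isRoot be -> ~ conn a be ->
  Lroot a u -> Lroot (oppf a) w -> Iclass be y -> br (br u w) y = 0.
Proof.
move=> ha hbe nab hu hw [hy [vy [hhy [hvy ->]]]].
rewrite brDr (H_abelian (br_Lroot_opp_H hu hw) (HLambda_H hhy)) add0r.
apply: (fam_sum_ind (br_eq0r_subspace _)) hvy => b z hb hz.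
case/LambdaClassE: hb => // rb cb.
apply: (br_HLambda_Lroot_disconnected ha rb _ hu hw hz).1 => C.
by apply: nab; apply: conn_trans C cb.
Qed.

Lemma Iclass_orthogonal al be : isRoot al -> isRoot be -> ~ conn al be ->
  forall x y, Iclass al x -> Iclass be y -> br x y = 0.
Proof.
move=> hal hbe nc x y [hx [vx [hhx [hvx ->]]]] hy.
have nab a : conn a al -> ~ conn a be by move=> ca C; apply: nc; apply: conn_trans (conn_sym ca) C.
rewrite brDl; have -> : br hx y = 0.
  apply: (span_brackets_ind (br_eq0l_subspace y)) hhx => c u w [a [ha [hu hw]]].
  case/LambdaClassE: ha => // ra ca.
  by rewrite brZl (br_HLambda_Iclass ra hbe (nab a ca) hu hw hy) scaler0.
rewrite add0r; apply: (fam_sum_ind (br_eq0l_subspace y)) hvx => a u ha hu.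
by case/LambdaClassE: ha => // ra ca; exact: br_Lroot_Iclass ra hbe (nab a ca) hu hy.
Qed.

(** ** The ideals span [L] *)

Local Notation Isum := (fam_sum isRoot Iclass).

Lemma Isum_subspace : subspace Isum.
Proof. by apply: fam_sum_subspace => i c v _; apply: subspaceZ (Iclass_subspace i). Qed.

Lemma Isum_Lroot a v : isRoot a -> Lroot a v -> Isum v.
Proof. by move=> ha hv; apply: (fam_sum1 ha); apply: Iclass_Lroot hv; apply: LambdaClass_refl. Qed.

Lemma Isum_br_H h y : H h -> Isum (br h y).
Proof.
move=> hh; have [hy [s [hhy hs ->]]] := split_decomp y.
rewrite brDr H_abelian // add0r (linear_vsum _ (linear_brr h)).
apply: (subspace_vsum Isum_subspace (R := fun _ v => Isum v)) => //.
apply: fam_of_map hs => p [hb hv] /=; apply: (Isum_Lroot (isRoot_psi hb)).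
by apply: Lroot_eqH0 (br_Lroot (H_Lroot0 hh) hv) => h' _; rewrite add0r.
Qed.

Lemma Isum_br_Lroot a u y : isRoot a -> Lroot a u -> Isum (br u y).
Proof.
move=> ha hu; have [hy [s [hhy hs ->]]] := split_decomp y.
rewrite brDr; apply: (subspaceD Isum_subspace).
  apply: (Isum_Lroot (isRoot_psi ha)).
  by apply: Lroot_eqH0 (br_Lroot hu (H_Lroot0 hhy)) => h' _; rewrite addr0.
rewrite (linear_vsum _ (linear_brr u)).
apply: (subspace_vsum Isum_subspace (R := fun _ v => Isum v)) => //.
apply: fam_of_map hs => p [hb hv] /=.
case: (br_Lroot_cases ha hb hu hv) => [->|[e _]|[hr hl]].
- exact: subspace0 Isum_subspace.
- apply: (fam_sum1 ha); apply: (Iclass_br_opp (b := a)) => //; first exact: LambdaClass_refl.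
  by apply: Lroot_eqH0 hv => h hh; exact: (eqH0_add0_opp e hh).
- exact: Isum_Lroot hr hl.
Qed.

Lemma Iclass_span x : Isum x.
Proof.
apply: (span_brackets_ind Isum_subspace) (hLL x) => c u w _; apply: (subspaceZ Isum_subspace).
have [hu [su [hhu hsu ->]]] := split_decomp u.
rewrite brDl; apply: (subspaceD Isum_subspace); first exact: Isum_br_H.
rewrite (linear_vsum _ (linear_brl _)).
apply: (subspace_vsum Isum_subspace (R := fun _ v => Isum v)) => //.
by apply: fam_of_map hsu => p [ha hv] /=; exact: Isum_br_Lroot ha hv.
Qed.

(** ** The sum is direct *)

Lemma Iclass_decomp al x : isRoot al -> Iclass al x -> exists hs : L * seq ((L -> K) * L),
  [/\ HLambda al hs.1, fam_of (fun a z => root_vec a z /\ conn a al) hs.2 & x = hs.1 + vsum hs.2].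
Proof.
move=> hal [h [w [hh [hw ->]]]]; have [s [hs ->]] := (fam_sum_seq _ _ _).1 hw.
exists (h, s); split => //.
by apply: fam_of_impl hs => a z [/(LambdaClassE _ hal) [h1 h2] h3].
Qed.

(** Each [h k] commutes with all of [L], so [Z(L) = 0] applies. *)
Lemma HLambda_sum_eq0 n (i : 'I_n -> L -> K) (h : 'I_n -> L) :
  (forall k, isRoot (i k)) -> (forall k l, k != l -> ~ conn (i k) (i l)) ->
  (forall k, HLambda (i k) (h k)) -> \sum_(k < n) h k = 0 -> forall k, h k = 0.
Proof.
move=> hr hc hh hs k0; apply: hZ => y.
have Ih k : Iclass (i k) (h k).
  exists (h k), 0; rewrite addr0; split => //.
  by split => //; apply: subspace0 (VLambda_subspace _).
have ek : h k0 = - \sum_(k < n | k != k0) h k.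
  by move: hs; rewrite (bigD1 k0) //= => e; apply/eqP; rewrite -addr_eq0 e.
have [hy [s [hhy hs' ->]]] := split_decomp y.
rewrite brDr H_abelian ?add0r; [|exact: HLambda_H (hh k0)|by []].
rewrite (linear_vsum _ (linear_brr _)); apply: vsum_eq0.
apply: fam_of_map hs' => p [hb hz] /=.
have Iz : Iclass p.1 p.2 by apply: Iclass_Lroot hz; apply: LambdaClass_refl.
case: (classic (conn p.1 (i k0))) => cb.
  rewrite ek brNl (big_morph (br^~ p.2) (linear_mapD (linear_brl p.2)) (br0l p.2)).
  rewrite big1 ?oppr0 // => k hk.
  apply: (Iclass_orthogonal (hr k) hb) (Ih k) Iz => C; apply: (hc k k0 hk).
  exact: conn_trans C cb.
by apply: (Iclass_orthogonal (hr k0) hb) (Ih k0) Iz => C; apply/cb/conn_sym.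
Qed.

Lemma Iclass_indep : fam_indep isRoot Iclass connected.
Proof.
move=> n i v hv hd hs.
have hr k : isRoot (i k) by case: (hv k).
have hc k l : k != l -> ~ conn (i k) (i l) by move=> kl /conn_connected; apply: hd.
have dec k := Iclass_decomp (hr k) (proj2 (hv k)).
pose f k := sval (constructive_indefinite_description _ (dec k)).
have hf k : [/\ HLambda (i k) (f k).1,
    fam_of (fun a z => root_vec a z /\ conn a (i k)) (f k).2 & v k = (f k).1 + vsum (f k).2].
  exact: svalP (constructive_indefinite_description _ (dec k)).
have fv k : fam_of root_vec (f k).2 by case: (hf k) => _ h2 _; apply: fam_of_impl h2 => a z [].
pose S := flatten [seq (f k).2 | k <- enum 'I_n].
have [eH hg] : \sum_(k < n) (f k).1 = 0 /\ forall j, class_vsum eqH0 S j = 0.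
  apply: split_indep.
  - by apply: subspace_sum H_subspace _ => k; case: (hf k) => h1 _ _; apply: HLambda_H h1.
  - rewrite /S; elim: (enum 'I_n) => [|k r IH] //=; exact: fam_of_cat (fv k) IH.
  rewrite -[RHS]hs vsum_flatten big_map big_enum /= -big_split /=.
  by apply: eq_bigr => k _; case: (hf k) => _ _ ->.
move=> k0; case: (hf k0) => _ h2 ->.
rewrite (HLambda_sum_eq0 hr hc (fun k => let: And3 h _ _ := hf k in h) eH k0) add0r.
apply: vsum_root_vec_eq0 => // j.
case: (classic (isRoot j /\ conn j (i k0))) => [[hj cj]|nj].
  have := hg j; rewrite /S class_vsum_flatten big_map big_enum /= (bigD1 k0) //=.
  rewrite big1 ?addr0 // => k hk; apply: class_vsum_out.
  case: (hf k) => _ hk2 _; apply/List.Forall_forall => p hp e.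
  have [_ cp] := proj1 (fam_of_In _ _) hk2 p hp.
  by apply: (hc k0 k); [rewrite eq_sym | exact: conn_trans (conn_sym cj) (conn_eqH0l e cp)].
apply: class_vsum_out; apply/List.Forall_forall => p hp e; apply: nj.
have [[rp _] cp] := proj1 (fam_of_In _ _) h2 p hp.
by split; [apply: isRoot_eqH0 e rp | apply: conn_eqH0l e cp].
Qed.

End HomLieColorAlgebra.

Unset Implicit Arguments.

Theorem mainTheorem11 (K : fieldType) (G : zmodType) (L : lmodType K)
  (Lg : G -> L -> Prop) (br : L -> L -> L) (phi psi : L -> L)
  (eps : G -> G -> K) (H : L -> Prop) :
  HomLieColor Lg br phi eps ->
  (* regular: phi bijective, with inverse psi *)
  cancel phi psi -> cancel psi phi ->
  max_abelian_subalgebra Lg br phi H ->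
  split_alg Lg H br phi ->
  symmetric_roots Lg H br phi ->
  zero_annihilator br ->
  (* [L, L] = L *)
  (forall x, span_brackets br (fun _ _ => True) x) ->
  (forall alpha, isRoot Lg H br phi alpha ->
     ideal Lg br phi (Iclass Lg H br phi psi alpha)) /\
  (forall alpha beta, isRoot Lg H br phi alpha -> isRoot Lg H br phi beta ->
     ~ connected Lg H br phi psi alpha beta ->
     forall x y, Iclass Lg H br phi psi alpha x -> Iclass Lg H br phi psi beta y ->
       br x y = 0) /\
  (forall x, fam_sum (isRoot Lg H br phi) (Iclass Lg H br phi psi) x) /\
  fam_indep (isRoot Lg H br phi) (Iclass Lg H br phi psi)
            (connected Lg H br phi psi).
Proof.
move=> hL phiK psiK hH hsplit hsym hZ hLL; split; [|split; [|split]].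
- exact: Iclass_ideal hL phiK psiK hH hsplit hsym.
- move=> al be hal hbe nc; apply: (Iclass_orthogonal hL phiK psiK hH hsplit hsym hal hbe).
  by move/(conn_connected hL phiK psiK hH).
- exact: Iclass_span hL phiK psiK hH hsplit hsym hLL.
- exact: Iclass_indep hL phiK psiK hH hsplit hsym hZ.
Qed.
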